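(* Fix $\mu\in(-1,1)$, let $m>0$ and $\kappa>0$ small, let $\xi\in\mathcal A_{\rho_\varepsilon}$ (i.e. $u^\xi\in\mathcal M_\mu$), and let $v$ (sufficiently regular) satisfy $\langle v,u^\xi_i\rangle=0$ for $i=1,\dots,N$, $\|v\|<\varepsilon^{3/2+m}$ and $\|v\|_{L^4}<\varepsilon^{3/4+m/2-\kappa}$. Then for each $i=1,\dots,N$, $$\langle u^\xi_i,\mathcal L(u^\xi+v)\rangle\le C\varepsilon^{2+2m-2\kappa},$$ with $C$ independent of $\varepsilon,\xi,v$.
   Context: $0<\varepsilon\ll1$; $f(u)=u^3-u$; $\langle\cdot,\cdot\rangle$, $\|\cdot\|$ inner product and norm of $L^2(0,1)$. $U(x)=\tanh(x/\sqrt2)$; $U(x;\xi,\pm1)=\pm U((x-\xi)/\varepsilon)$. Fix an integer $N\ge1$, small $\kappa_0>0$, $\rho_\varepsilon=\varepsilon^{\kappa_0}$. $\Omega_{\rho_\varepsilon}=\{h\in\mathbb R^{N+1}:0<h_1<\dots<h_{N+1}<1,\ \min_{j=0,\dots,N+1}|h_{j+1}-h_j|>\varepsilon/\rho_\varepsilon\}$ with $h_0=-h_1$, $h_{N+2}=2-h_{N+1}$. For $h\in\Omega_{\rho_\varepsilon}$, $u^h=\sum_{j=1}^{N+1}U(\cdot;h_j,(-1)^{j+1})+\beta_N$, where $\beta_N=\frac{(-1)^N-1}{2}+\mathcal O(\exp)$ (also for derivatives; exponentially small in $\varepsilon$) makes $u^h(0)=-1$ and $u^h$ satisfy Neumann boundary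 conditions. $\mathcal M=\{u^h:h\in\Omega_{\rho_\varepsilon}\}$, $\mathcal M_\mu=\{u^h\in\mathcal M:\int_0^1u^h=\mu\}$. There is a smooth map $h_{N+1}:[0,1]^N\to\mathbb R$ such that $u^h\in\mathcal M_\mu$ iff $h=(\xi,h_{N+1}(\xi))\in\Omega_{\rho_\varepsilon}$, $\xi=(h_1,\dots,h_N)$; $\mathcal A_{\rho_\varepsilon}=\{(\xi,h_{N+1}(\xi))\in\Omega_{\rho_\varepsilon}:\xi\in[0,1]^N\}$, and for such $\xi$, $u^\xi=u^{(\xi,h_{N+1}(\xi))}$, $u^\xi_i=\partial_{\xi_i}u^\xi$. $\mathcal L(\psi)=\varepsilon^2\psi_{xx}-f(\psi)$. *)

From Stdlib Require Import Reals Lra Lia Arith.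
From Coquelicot Require Import Coquelicot.
Open Scope R_scope.

Definition tanh (y : R) : R := (exp y - exp (- y)) / (exp y + exp (- y)).

Definition Uprof (y : R) : R := tanh (y / sqrt 2).
Definition Uprof' (y : R) : R := (1 - (Uprof y) ^ 2) / sqrt 2.

(* U(x; xi, s) = s * U((x - xi)/eps),  s = +1 or -1 *)
Definition layer (eps xi s x : R) : R := s * Uprof ((x - xi) / eps).
Definition layer' (eps xi s x : R) : R := s * Uprof' ((x - xi) / eps) / eps.

(* Points h : nat -> R, only h 1, ..., h (N+1) are used.
   Sum of the N+1 alternating layers: sum_{j=1}^{N+1} U(x; h_j, (-1)^(j+1)). *)
Definition Ssum (eps : R) (N : nat) (h : nat -> R) (x : R) : R :=
  sum_n (fun k => layer eps (h (S k)) ((-1) ^ k) x) N.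
Definition Ssum' (eps : R) (N : nat) (h : nat -> R) (x : R) : R :=
  sum_n (fun k => layer' eps (h (S k)) ((-1) ^ k) x) N.

(* Correction beta_N(h, x): the (explicit) smooth correction making
   u^h(0) = -1 and (u^h)'(0) = (u^h)'(1) = 0 (Neumann).  It equals
   ((-1)^N - 1)/2 up to exponentially small terms. *)
Definition betaN (eps : R) (N : nat) (h : nat -> R) (x : R) : R :=
  (- 1 - Ssum eps N h 0) - Ssum' eps N h 0 * x
  + (Ssum' eps N h 0 - Ssum' eps N h 1) / 2 * x ^ 2.

Definition uh (eps : R) (N : nat) (h : nat -> R) (x : R) : R :=
  Ssum eps N h x + betaN eps N h x.

Definition rho (eps kappa0 : R) : R := Rpower eps kappa0.

Definition hext (N : nat) (h : nat -> R) (j : nat) : R :=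
  if Nat.eqb j 0 then - h 1%nat
  else if Nat.eqb j (N + 2) then 2 - h (N + 1)%nat
  else h j.

Definition InOmega (eps kappa0 : R) (N : nat) (h : nat -> R) : Prop :=
  0 < h 1%nat /\
  (forall j : nat, (1 <= j <= N)%nat -> h j < h (S j)) /\
  h (N + 1)%nat < 1 /\
  (forall j : nat, (j <= N + 1)%nat ->
     Rabs (hext N h (S j) - hext N h j) > eps / rho eps kappa0).

Definition hcat (N : nat) (xi : nat -> R) (t : R) : nat -> R :=
  fun j => if Nat.eqb j (N + 1) then t else xi j.

Definition shift (xi : nat -> R) (i : nat) (s : R) : nat -> R :=
  fun j => if Nat.eqb j i then xi j + s else xi j.

Definition mass (eps : R) (N : nat) (h : nat -> R) : R :=
  RInt (uh eps N h) 0 1.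

(* H plays the role of the map h_{N+1} : xi |-> h_{N+1}(xi) near xi:
   it enforces the mass constraint int_0^1 u^(xi', H xi') = mu for all xi'
   near xi in the coordinate directions, and is differentiable at xi
   in each coordinate direction. *)
Definition mass_map (eps : R) (N : nat) (mu : R) (H : (nat -> R) -> R)
  (xi : nat -> R) : Prop :=
  (exists delta : R, 0 < delta /\
     forall i : nat, (1 <= i <= N)%nat ->
     forall s : R, Rabs s < delta ->
       mass eps N (hcat N (shift xi i s) (H (shift xi i s))) = mu) /\
  (forall i : nat, (1 <= i <= N)%nat ->
     ex_derive (fun s => H (shift xi i s)) 0).

Definition uxi (eps : R) (N : nat) (H : (nat -> R) -> R) (xi : nat -> R)
  (x : R) : R := uh eps N (hcat N xi (H xi)) x.

Definition uxi_i (eps : R) (N : nat) (H : (nat -> R) -> R) (xi : nat -> R)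
  (i : nat) (x : R) : R :=
  Derive (fun s => uxi eps N H (shift xi i s) x) 0.

Definition f (u : R) : R := u ^ 3 - u.
Definition Lop (eps : R) (psi : R -> R) (x : R) : R :=
  eps ^ 2 * Derive_n psi 2 x - f (psi x).

Definition ip (g1 g2 : R -> R) : R := RInt (fun x => g1 x * g2 x) 0 1.
Definition L2norm (g : R -> R) : R := sqrt (RInt (fun x => (g x) ^ 2) 0 1).
Definition L4norm (g : R -> R) : R := sqrt (sqrt (RInt (fun x => (g x) ^ 4) 0 1)).

(* "sufficiently regular": C^2 on [0,1] (twice differentiable everywhere,
   continuous second derivative on [0,1]) with Neumann boundary conditions *)
Definition regular_neumann (v : R -> R) : Prop :=
  (forall x, ex_derive v x) /\ (forall x, ex_derive (Derive v) x) /\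
  (forall x, 0 <= x <= 1 -> continuous (Derive_n v 2) x) /\
  Derive v 0 = 0 /\ Derive v 1 = 0.

(* Differentiating [u^xi] in [xi_i] moves the [i]-th layer and, through the mass
   constraint, the last one, so [u^xi_i] is a combination [W] of two translation modes
   [d/dt] of (boundary-corrected) layers, with a coefficient bounded by 3.  Layers are
   [e^(1 - kappa0) / 2]-separated from each other and from the boundary, so all
   interactions are of size [tail = exp (- sqrt 2 e^(-kappa0) / 2)], which beats every
   power of [e]; in particular both [W L(u^xi)] and the linearisation [e^2 W'' - f'(u^xi) W]
   are negligible, since each layer solves [e^2 U'' = f(U)].  Writing
   [L(u^xi + v) = L(u^xi) + e^2 v'' - f'(u^xi) v - (3 u^xi v^2 + v^3)] and moving [e^2 d^2/dx^2]
   onto [W] with Green's formula (Neumann conditions), only [W (3 u^xi v^2 + v^3)] is left;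
   as [|W| <= 8 / e], [int v^2 < e^(3 + 2m)], [int v^4 < e^(3 + 2m - 4 kappa)] and
   [|v|^3 <= v^2 / l + l v^4] with [l = e^(2 kappa)], it is [O(e^(2 + 2m - 2 kappa))]. *)

From Pilot Require Import Defs.
From Stdlib Require Import Reals Lra Lia FunctionalExtensionality.
From Coquelicot Require Import Coquelicot.
Open Scope R_scope.

Lemma is_derive_Rplus (g k : R -> R) x dg dk :
  is_derive g x dg -> is_derive k x dk -> is_derive (fun y => g y + k y) x (dg + dk).
Proof. exact (is_derive_plus g k x dg dk). Qed.

Lemma is_derive_Rminus (g k : R -> R) x dg dk :
  is_derive g x dg -> is_derive k x dk -> is_derive (fun y => g y - k y) x (dg - dk).
Proof. exact (is_derive_minus g k x dg dk). Qed.

Lemma is_derive_Rmult (g k : R -> R) x dg dk :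
  is_derive g x dg -> is_derive k x dk ->
  is_derive (fun y => g y * k y) x (dg * k x + g x * dk).
Proof. intros Hg Hk. exact (is_derive_mult g k x dg dk Hg Hk Rmult_comm). Qed.

Lemma continuous_of_is_derive (g : R -> R) x l : is_derive g x l -> continuous g x.
Proof. intros Hg. apply (ex_derive_continuous (V := R_NormedModule)). exists l. exact Hg. Qed.

Lemma continuous_Rplus (g k : R -> R) x :
  continuous g x -> continuous k x -> continuous (fun y => g y + k y) x.
Proof. exact (continuous_plus g k x). Qed.

Lemma continuous_Rminus (g k : R -> R) x :
  continuous g x -> continuous k x -> continuous (fun y => g y - k y) x.
Proof. exact (continuous_minus g k x). Qed.

Lemma continuous_Rmult (g k : R -> R) x :
  continuous g x -> continuous k x -> continuous (fun y => g y * k y) x.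
Proof. exact (continuous_mult g k x). Qed.

Lemma continuous_Rconst (c x : R) : continuous (fun _ : R => c) x.
Proof. exact (continuous_const c x). Qed.

Lemma continuous_Rpow (g : R -> R) n x : continuous g x -> continuous (fun y => g y ^ n) x.
Proof.
  intros Hg. induction n as [|n IH]; [apply continuous_Rconst|].
  apply (continuous_Rmult g (fun y => g y ^ n)); auto.
Qed.

Ltac solve_continuous :=
  repeat match goal with
  | |- continuous (fun _ => ?c) _ => apply continuous_Rconst
  | |- continuous (fun y => @?g y + @?k y) _ => apply (continuous_Rplus g k)
  | |- continuous (fun y => @?g y - @?k y) _ => apply (continuous_Rminus g k)
  | |- continuous (fun y => @?g y * @?k y) _ => apply (continuous_Rmult g k)
  | |- continuous (fun y => @?g y ^ ?n) _ => apply (continuous_Rpow g n)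
  end; auto.

Lemma ex_RInt_01 (g : R -> R) : (forall x, 0 <= x <= 1 -> continuous g x) -> ex_RInt g 0 1.
Proof.
  intros Hg. apply (ex_RInt_continuous (V := R_CompleteNormedModule)). intros z Hz.
  apply Hg. rewrite Rmin_left, Rmax_right in Hz by lra. exact Hz.
Qed.

Lemma RInt_Rplus (g k : R -> R) a b : ex_RInt g a b -> ex_RInt k a b ->
  RInt (fun x => g x + k x) a b = RInt g a b + RInt k a b :> R.
Proof. exact (RInt_plus g k a b). Qed.

Lemma RInt_Rmult_l (g : R -> R) c a b : ex_RInt g a b ->
  RInt (fun x => c * g x) a b = c * RInt g a b :> R.
Proof. exact (RInt_scal g a b c). Qed.

Lemma RInt_01_const (c : R) : RInt (fun _ => c) 0 1 = c :> R.
Proof. rewrite RInt_const. unfold scal; simpl. unfold mult; simpl. ring. Qed.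

Lemma RInt_Green_Neumann (p p1 p2 w w1 w2 : R -> R) :
  (forall x, 0 <= x <= 1 -> is_derive p x (p1 x)) ->
  (forall x, 0 <= x <= 1 -> is_derive p1 x (p2 x)) ->
  (forall x, 0 <= x <= 1 -> is_derive w x (w1 x)) ->
  (forall x, 0 <= x <= 1 -> is_derive w1 x (w2 x)) ->
  (forall x, 0 <= x <= 1 -> continuous (fun y => p y * w2 y - p2 y * w y) x) ->
  p1 0 = 0 -> p1 1 = 0 -> w1 0 = 0 -> w1 1 = 0 ->
  RInt (fun x => p x * w2 x - p2 x * w x) 0 1 = 0.
Proof.
  intros Hp Hp1 Hw Hw1 Hc Hp0 Hp1' Hw0 Hw1'.
  pose (F := fun x => p x * w1 x - p1 x * w x).
  assert (HI : is_RInt (fun x => p x * w2 x - p2 x * w x) 0 1 (minus (F 1) (F 0))).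
  { apply (is_RInt_derive F); intros x Hx; rewrite Rmin_left, Rmax_right in Hx by lra.
    - replace (p x * w2 x - p2 x * w x)
        with ((p1 x * w1 x + p x * w2 x) - (p2 x * w x + p1 x * w1 x)) by ring.
      apply is_derive_Rminus; apply is_derive_Rmult; auto.
    - apply Hc; auto. }
  rewrite (is_RInt_unique _ _ _ _ HI). unfold F, minus, plus, opp; simpl.
  rewrite Hp0, Hp1', Hw0, Hw1'. ring.
Qed.

Lemma sum_n_S (a : nat -> R) n : sum_n a (S n) = sum_n a n + a (S n) :> R.
Proof. rewrite !sum_n_Reals. reflexivity. Qed.

Lemma sum_n_Rplus (a b : nat -> R) n :
  sum_n (fun k => a k + b k) n = sum_n a n + sum_n b n :> R.
Proof. rewrite !sum_n_Reals. apply sum_plus. Qed.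

Lemma sum_n_Rminus (a b : nat -> R) n :
  sum_n (fun k => a k - b k) n = sum_n a n - sum_n b n :> R.
Proof. rewrite !sum_n_Reals. apply minus_sum. Qed.

Lemma sum_n_Rmult_l (c : R) (a : nat -> R) n :
  sum_n (fun k => c * a k) n = c * sum_n a n :> R.
Proof.
  rewrite !sum_n_Reals, scal_sum. apply sum_eq. intros; ring.
Qed.

Lemma Rabs_sum_n_le (a : nat -> R) n B :
  (forall k, (k <= n)%nat -> Rabs (a k) <= B) -> Rabs (sum_n a n) <= INR (S n) * B.
Proof.
  intros Ha. rewrite sum_n_Reals. eapply Rle_trans; [apply Rsum_abs|].
  rewrite Rmult_comm, <- sum_cte. apply sum_Rle. intros k Hk. apply Ha. lia.
Qed.

Lemma Rabs_sum_n_mul_le (q : nat -> R) n p B : 0 < p ->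
  (forall k, (k <= n)%nat -> Rabs (q k) * p <= B) -> Rabs (sum_n q n) * p <= INR (S n) * B.
Proof.
  intros Hp Hq. rewrite <- (Rabs_pos_eq p), <- Rabs_mult, Rmult_comm by lra.
  rewrite <- sum_n_Rmult_l. apply Rabs_sum_n_le. intros k Hk.
  rewrite Rabs_mult, (Rabs_pos_eq p), Rmult_comm by lra. auto.
Qed.

Lemma sum_n_indicator (c : R) a n : (a <= n)%nat ->
  sum_n (fun k => if Nat.eqb k a then c else 0) n = c :> R.
Proof.
  induction n as [|n IH]; intros Ha.
  - rewrite sum_O. replace a with 0%nat by lia. reflexivity.
  - rewrite sum_n_S. destruct (Nat.eqb_spec (S n) a) as [<- | Hne].
    + rewrite (sum_n_ext_loc _ (fun _ => 0)).
      * rewrite sum_n_const. ring.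
      * intros k Hk. destruct (Nat.eqb_spec k (S n)); [lia | reflexivity].
    + rewrite IH by lia. ring.
Qed.

Lemma sum_n_isolate2 (g : nat -> R) a b n : a <> b -> (a <= n)%nat -> (b <= n)%nat ->
  sum_n g n
  = sum_n (fun k => if Nat.eqb k a then 0 else if Nat.eqb k b then 0 else g k) n + g a + g b :> R.
Proof.
  intros Hab Ha Hb.
  rewrite <- (sum_n_indicator (g a) a n Ha), <- (sum_n_indicator (g b) b n Hb).
  rewrite <- !sum_n_Rplus. apply sum_n_ext_loc. intros k _.
  destruct (Nat.eqb_spec k a), (Nat.eqb_spec k b); subst; try lia; simpl; ring.
Qed.

Lemma alternating_prefix_sum a n : (a <= n)%nat ->
  sum_n (fun k => if Nat.ltb k a then 2 * (-1) ^ k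
                  else if Nat.eqb k a then (-1) ^ k else 0) n = 1 :> R.
Proof.
  intros Ha.
  assert (Hpartial : forall m,
    sum_n (fun k => if Nat.ltb k a then 2 * (-1) ^ k
                    else if Nat.eqb k a then (-1) ^ k else 0) m
    = (if Nat.ltb m a then 1 + (-1) ^ m else 1) :> R).
  { induction m as [|m IH].
    - rewrite sum_O. destruct a; simpl; ring.
    - rewrite sum_n_S, IH.
      destruct (Nat.ltb_spec m a), (Nat.ltb_spec (S m) a); try lia.
      + simpl. ring.
      + replace a with (S m) by lia. rewrite Nat.eqb_refl. simpl. ring.
      + destruct (Nat.eqb_spec (S m) a); [lia | ring]. }
  rewrite Hpartial. destruct (Nat.ltb_spec n a); [lia | reflexivity].
Qed.

Lemma Rabs_sign k : Rabs ((-1) ^ k) = 1.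
Proof. rewrite <- RPow_abs, Rabs_m1. apply pow1. Qed.

Lemma sqrt2_pos : 0 < sqrt 2.
Proof. apply sqrt_lt_R0; lra. Qed.

Lemma sqrt2_ge1 : 1 <= sqrt 2.
Proof. rewrite <- sqrt_1. apply sqrt_le_1_alt. lra. Qed.

Lemma exp_le_exp x y : x <= y -> exp x <= exp y.
Proof. intros [Hlt | ->]; [left; apply exp_increasing | right]; auto. Qed.

Lemma sq_div4_le_exp w : 0 <= w -> w ^ 2 / 4 <= exp w.
Proof.
  intros Hw. replace (exp w) with (exp (w / 2) ^ 2)
    by (simpl; rewrite Rmult_1_r, <- exp_plus; f_equal; field).
  replace (w ^ 2 / 4) with ((w / 2) ^ 2) by field.
  apply pow_incr. pose proof (exp_ineq1_le (w / 2)). lra.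
Qed.

Lemma sqrt_lt_sq x r : 0 < r -> sqrt x < r -> x < r * r.
Proof.
  intros Hr Hs. destruct (Rle_dec 0 x) as [Hx | Hx]; [|nra].
  pose proof (sqrt_sqrt x Hx). pose proof (sqrt_pos x). nra.
Qed.

Lemma Rle_Rpower_lt1 e a b : 0 < e < 1 -> a <= b -> Rpower e b <= Rpower e a.
Proof.
  intros He Hab. unfold Rpower. apply exp_le_exp.
  assert (ln e < 0) by (rewrite <- ln_1; apply ln_increasing; lra). nra.
Qed.

Lemma Rpower_plus1 e a : 0 < e -> Rpower e (a + 1) = Rpower e a * e.
Proof. intros He. rewrite Rpower_plus, Rpower_1 by auto. reflexivity. Qed.

Lemma Rle_div_lt1 a e : 0 <= a -> 0 < e < 1 -> a <= a / e.
Proof.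
  intros Ha He. apply Rmult_le_reg_r with e; [lra|].
  unfold Rdiv. rewrite Rmult_assoc, Rinv_l by lra. nra.
Qed.

Lemma Rle_div_sq_lt1 a e : 0 <= a -> 0 < e < 1 -> a / e <= a / e ^ 2.
Proof.
  intros Ha He. replace (a / e ^ 2) with ((a / e) / e) by (field; lra).
  apply Rle_div_lt1; [apply Rdiv_le_0_compat|]; lra.
Qed.

Lemma Rabs_lin_quad_le A B x a b : Rabs A <= a -> Rabs B <= b -> 0 <= x <= 1 ->
  Rabs (A * x + B * x ^ 2) <= a + b.
Proof.
  intros HA HB Hx. eapply Rle_trans; [apply Rabs_triang|].
  rewrite !Rabs_mult, (Rabs_pos_eq x), (Rabs_pos_eq (x ^ 2)) by (try apply pow_le; lra).
  pose proof (Rabs_pos A). pose proof (Rabs_pos B).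
  assert (x ^ 2 <= 1) by (simpl; nra). apply Rplus_le_compat; nra.
Qed.

Lemma Rabs_half_diff_le A B a : Rabs A <= a -> Rabs B <= a -> Rabs ((A - B) / 2) <= a.
Proof.
  intros HA HB. unfold Rdiv. rewrite Rabs_mult, (Rabs_pos_eq (/ 2)) by lra.
  pose proof (Rabs_triang A (- B)). rewrite Rabs_Ropp in H. unfold Rminus. lra.
Qed.

Lemma Rabs_comb_le A B c K : Rabs A <= K -> Rabs B <= K -> Rabs c <= 3 ->
  Rabs (A + c * B) <= 4 * K.
Proof.
  intros HA HB Hc. eapply Rle_trans; [apply Rabs_triang|]. rewrite Rabs_mult.
  pose proof (Rabs_pos B). pose proof (Rabs_pos c). nra.
Qed.

Lemma Rabs_le_1_add_sq v : Rabs v <= 1 + v ^ 2.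
Proof. pose proof (Rabs_pos v). rewrite <- pow2_abs. nra. Qed.

Lemma Rabs_cube_le v l : 0 < l -> Rabs v ^ 3 <= v ^ 2 / l + l * v ^ 4.
Proof.
  intros Hl. replace (v ^ 4) with ((v ^ 2) ^ 2) by ring. rewrite <- (pow2_abs v).
  set (a := Rabs v). assert (0 <= a) by apply Rabs_pos.
  apply Rmult_le_reg_r with l; [exact Hl|].
  replace ((a ^ 2 / l + l * (a ^ 2) ^ 2) * l) with (a ^ 2 + l ^ 2 * (a ^ 2) ^ 2) by (field; lra).
  pose proof (pow2_ge_0 (l * a ^ 2 - a)). nra.
Qed.

Definition fprime (z : R) : R := 3 * z ^ 2 - 1.

Lemma Rabs_f_sub_le A B K : Rabs A <= 1 -> Rabs B <= K ->
  Rabs (Defs.f A - Defs.f B) <= (2 + K + K ^ 2) * Rabs (A - B).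
Proof.
  intros HA HB. unfold Defs.f.
  replace (A ^ 3 - A - (B ^ 3 - B)) with ((A - B) * (A ^ 2 + A * B + B ^ 2 - 1)) by ring.
  rewrite Rabs_mult, Rmult_comm. apply Rmult_le_compat_r; [apply Rabs_pos|].
  pose proof (Rabs_pos A). pose proof (Rabs_pos B).
  assert (Rabs (A ^ 2) <= 1) by (rewrite <- RPow_abs; simpl; nra).
  assert (Rabs (A * B) <= K) by (rewrite Rabs_mult; nra).
  assert (Rabs (B ^ 2) <= K ^ 2) by (rewrite <- RPow_abs; simpl; nra).
  pose proof (Rabs_triang (A ^ 2 + A * B + B ^ 2) (Ropp 1)).
  pose proof (Rabs_triang (A ^ 2 + A * B) (B ^ 2)). pose proof (Rabs_triang (A ^ 2) (A * B)).
  rewrite Rabs_Ropp, Rabs_R1 in H4. unfold Rminus. lra.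
Qed.

Lemma Rabs_f_le A K : Rabs A <= K -> Rabs (Defs.f A) <= K ^ 3 + K.
Proof.
  intros HA. unfold Defs.f. pose proof (Rabs_pos A).
  pose proof (Rabs_triang (A ^ 3) (- A)). rewrite Rabs_Ropp, <- RPow_abs in H0.
  assert (Rabs A ^ 3 <= K ^ 3) by (apply pow_incr; lra). unfold Rminus. lra.
Qed.

Lemma Rabs_fprime_le A K : Rabs A <= K -> Rabs (fprime A) <= 3 * K ^ 2 + 1.
Proof.
  intros HA. unfold fprime. pose proof (Rabs_pos A).
  pose proof (Rabs_triang (3 * A ^ 2) (Ropp 1)).
  rewrite Rabs_Ropp, Rabs_R1, Rabs_mult, <- RPow_abs, (Rabs_pos_eq 3) in H0 by lra.
  assert (Rabs A ^ 2 <= K ^ 2) by (apply pow_incr; lra). unfold Rminus. lra.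
Qed.

Lemma Rabs_fprime_sub_le A B K : Rabs A <= K -> Rabs B <= 1 ->
  Rabs (fprime A - fprime B) <= 3 * (K + 1) * Rabs (A - B).
Proof.
  intros HA HB. unfold fprime.
  replace (3 * A ^ 2 - 1 - (3 * B ^ 2 - 1)) with (3 * (A + B) * (A - B)) by ring.
  rewrite !Rabs_mult, (Rabs_pos_eq 3) by lra. pose proof (Rabs_triang A B).
  pose proof (Rabs_pos (A - B)). nra.
Qed.

(** * The profile [U] *)

Definition sech2 (y : R) : R := 1 - Uprof y ^ 2.

Definition Uprof'' (y : R) : R := Defs.f (Uprof y).

Definition Uprof''' (y : R) : R := fprime (Uprof y) * Uprof' y.

Definition Uprim (y : R) : R :=
  sqrt 2 * ln ((exp (y / sqrt 2) + exp (- (y / sqrt 2))) / 2).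

Lemma is_derive_Uprof y : is_derive Uprof y (Uprof' y).
Proof.
  unfold Uprof', Uprof, Defs.tanh. pose proof sqrt2_pos.
  auto_derive.
  - apply Rgt_not_eq, Rplus_lt_0_compat; apply exp_pos.
  - unfold Rdiv. set (a := exp (y * / sqrt 2)). set (b := exp (- (y * / sqrt 2))).
    assert (0 < a) by apply exp_pos. assert (0 < b) by apply exp_pos.
    field. split; lra.
Qed.

Lemma ex_derive_Uprof y : ex_derive Uprof y.
Proof. eexists; apply is_derive_Uprof. Qed.

Lemma Derive_Uprof y : Derive Uprof y = Uprof' y.
Proof. apply is_derive_unique, is_derive_Uprof. Qed.

Lemma is_derive_Uprof' y : is_derive Uprof' y (Uprof'' y).
Proof.
  unfold Uprof', Uprof'', Defs.f. pose proof sqrt2_pos.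
  auto_derive; [apply ex_derive_Uprof|].
  rewrite Derive_Uprof. unfold Uprof'. field_simplify; [|lra].
  replace (sqrt 2 ^ 2) with 2 by (simpl; rewrite Rmult_1_r, sqrt_sqrt; lra). field.
Qed.

Lemma ex_derive_Uprof' y : ex_derive Uprof' y.
Proof. eexists; apply is_derive_Uprof'. Qed.

Lemma Derive_Uprof' y : Derive Uprof' y = Uprof'' y.
Proof. apply is_derive_unique, is_derive_Uprof'. Qed.

Lemma is_derive_Uprof'' y : is_derive Uprof'' y (Uprof''' y).
Proof.
  unfold Uprof'', Uprof''', fprime, Defs.f.
  auto_derive; [repeat split; apply ex_derive_Uprof|]. rewrite Derive_Uprof. ring.
Qed.

Lemma ex_derive_Uprof'' y : ex_derive Uprof'' y.
Proof. eexists; apply is_derive_Uprof''. Qed.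

Lemma Derive_Uprof'' y : Derive Uprof'' y = Uprof''' y.
Proof. apply is_derive_unique, is_derive_Uprof''. Qed.

Lemma ex_derive_Uprof''' y : ex_derive Uprof''' y.
Proof.
  unfold Uprof''', fprime.
  auto_derive. split; [apply ex_derive_Uprof|]. split; [apply ex_derive_Uprof'|]. exact I.
Qed.

Lemma is_derive_Uprim y : is_derive Uprim y (Uprof y).
Proof.
  unfold Uprim, Uprof, Defs.tanh. pose proof sqrt2_pos. auto_derive.
  - apply Rdiv_lt_0_compat; [apply Rplus_lt_0_compat; apply exp_pos | lra].
  - unfold Rdiv. set (a := exp (y * / sqrt 2)). set (b := exp (- (y * / sqrt 2))).
    assert (0 < a) by apply exp_pos. assert (0 < b) by apply exp_pos.
    field. split; lra.
Qed.

Lemma ex_derive_Uprim y : ex_derive Uprim y.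
Proof. eexists; apply is_derive_Uprim. Qed.

Lemma Derive_Uprim y : Derive Uprim y = Uprof y.
Proof. apply is_derive_unique, is_derive_Uprim. Qed.

Lemma Rabs_Uprof_lt1 y : Rabs (Uprof y) < 1.
Proof.
  unfold Uprof, Defs.tanh.
  set (a := exp (y / sqrt 2)). set (b := exp (- (y / sqrt 2))).
  assert (0 < a) by apply exp_pos. assert (0 < b) by apply exp_pos.
  apply Rabs_def1; apply Rmult_lt_reg_r with (a + b); try lra;
    unfold Rdiv; rewrite Rmult_assoc, Rinv_l; lra.
Qed.

Lemma Rabs_Uprof_le1 y : Rabs (Uprof y) <= 1.
Proof. left; apply Rabs_Uprof_lt1. Qed.

Lemma Uprof_opp y : Uprof (- y) = - Uprof y.
Proof.
  unfold Uprof, Defs.tanh. pose proof sqrt2_pos.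
  replace (- y / sqrt 2) with (- (y / sqrt 2)) by (field; lra).
  rewrite Ropp_involutive.
  set (a := exp (y / sqrt 2)). set (b := exp (- (y / sqrt 2))).
  assert (0 < a) by apply exp_pos. assert (0 < b) by apply exp_pos.
  field. lra.
Qed.

Lemma Uprof_ge0 y : 0 <= y -> 0 <= Uprof y.
Proof.
  intros Hy. unfold Uprof, Defs.tanh. pose proof sqrt2_pos.
  assert (exp (- (y / sqrt 2)) <= exp (y / sqrt 2)).
  { apply exp_le_exp. assert (0 <= y / sqrt 2) by (apply Rdiv_le_0_compat; lra). lra. }
  apply Rdiv_le_0_compat; [lra | apply Rplus_lt_0_compat; apply exp_pos].
Qed.

Lemma sech2_pos y : 0 < sech2 y.
Proof.
  unfold sech2. pose proof (Rabs_Uprof_lt1 y). rewrite <- pow2_abs.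
  pose proof (Rabs_pos (Uprof y)). nra.
Qed.

Lemma sech2_le1 y : sech2 y <= 1.
Proof. unfold sech2. pose proof (pow2_ge_0 (Uprof y)). lra. Qed.

Lemma sech2_opp y : sech2 (- y) = sech2 y.
Proof. unfold sech2. rewrite Uprof_opp. ring. Qed.

Lemma sech2_exp_decay y : sech2 y <= 4 * exp (- (sqrt 2 * Rabs y)).
Proof.
  unfold sech2, Uprof, Defs.tanh. pose proof sqrt2_pos.
  set (a := exp (y / sqrt 2)). set (b := exp (- (y / sqrt 2))).
  assert (0 < a) by apply exp_pos. assert (0 < b) by apply exp_pos.
  assert (Hab : a * b = 1).
  { unfold a, b. rewrite <- exp_plus, Rplus_opp_r. apply exp_0. }
  assert (E : 1 - ((a - b) / (a + b)) ^ 2 = 4 / (a + b) ^ 2).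
  { field_simplify; try lra. replace (4 * a * b) with 4 by (rewrite Rmult_assoc, Hab; ring).
    reflexivity. }
  rewrite E, exp_Ropp.
  (* [(a + b)^2 >= max(a, b)^2 = exp (sqrt 2 * |y|)] *)
  assert (Hm : exp (sqrt 2 * Rabs y) <= (a + b) ^ 2).
  { replace (exp (sqrt 2 * Rabs y)) with (exp (Rabs y / sqrt 2) ^ 2).
    2:{ simpl. rewrite Rmult_1_r, <- exp_plus. f_equal.
        replace (sqrt 2 * Rabs y) with (sqrt 2 * sqrt 2 * Rabs y / sqrt 2) by (field; lra).
        rewrite sqrt_sqrt by lra. field. lra. }
    apply pow_incr. split; [left; apply exp_pos|].
    destruct (Rle_dec 0 y).
    - rewrite Rabs_right by lra. fold a. lra.
    - rewrite Rabs_left by lra.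
      replace (- y / sqrt 2) with (- (y / sqrt 2)) by (field; lra). fold b. lra. }
  unfold Rdiv. apply Rmult_le_compat_l; [lra|].
  apply Rinv_le_contravar; [apply exp_pos | exact Hm].
Qed.

Lemma Rabs_Uprof'_le y : Rabs (Uprof' y) <= sech2 y.
Proof.
  unfold Uprof'. fold (sech2 y). pose proof (sech2_pos y). pose proof sqrt2_ge1.
  rewrite Rabs_right by (apply Rle_ge, Rdiv_le_0_compat; lra).
  apply Rmult_le_reg_r with (sqrt 2); [lra|].
  unfold Rdiv. rewrite Rmult_assoc, Rinv_l by lra. nra.
Qed.

Lemma Rabs_Uprof''_le y : Rabs (Uprof'' y) <= sech2 y.
Proof.
  unfold Uprof'', Defs.f, sech2.
  replace (Uprof y ^ 3 - Uprof y) with (- Uprof y * (1 - Uprof y ^ 2)) by ring.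
  pose proof (sech2_pos y). unfold sech2 in H.
  rewrite Rabs_mult, Rabs_Ropp, (Rabs_pos_eq (1 - _)) by lra.
  pose proof (Rabs_Uprof_le1 y). pose proof (Rabs_pos (Uprof y)). nra.
Qed.

Lemma Rabs_Uprof_sub1_le y : 0 <= y -> Rabs (Uprof y - 1) <= sech2 y.
Proof.
  intros Hy. pose proof (Uprof_ge0 y Hy). pose proof (Rabs_Uprof_le1 y).
  rewrite Rabs_right in H0 by lra. unfold sech2.
  rewrite Rabs_left1 by lra. nra.
Qed.

Lemma Rabs_Uprof_add1_le y : y <= 0 -> Rabs (Uprof y + 1) <= sech2 y.
Proof.
  intros Hy. rewrite <- sech2_opp. replace y with (- - y) by ring.
  rewrite Uprof_opp, Ropp_involutive.
  replace (- Uprof (- y) + 1) with (- (Uprof (- y) - 1)) by ring.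
  rewrite Rabs_Ropp. apply Rabs_Uprof_sub1_le. lra.
Qed.

(** * Corrected layers *)

Definition layer'' (eps xi s x : R) : R := s * Uprof'' ((x - xi) / eps) / eps ^ 2.

Definition layer''' (eps xi s x : R) : R := s * Uprof''' ((x - xi) / eps) / eps ^ 3.

(* One layer together with its share of [betaN], which is additive over the
   layers; hence [uh_sum_clayer].  The suffixes [_x], [_t] denote derivatives
   in the position [x] and in the layer centre [t]. *)
Definition clayer (e t s x : R) : R :=
  layer e t s x - layer e t s 0 - layer' e t s 0 * x
  + (layer' e t s 0 - layer' e t s 1) / 2 * x ^ 2.

Definition clayer_x (e t s x : R) : R :=
  layer' e t s x - layer' e t s 0 + (layer' e t s 0 - layer' e t s 1) * x.

Definition clayer_xx (e t s x : R) : R :=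
  layer'' e t s x + layer' e t s 0 - layer' e t s 1.

Definition clayer_t (e t s x : R) : R :=
  - layer' e t s x + layer' e t s 0 + layer'' e t s 0 * x
  - (layer'' e t s 0 - layer'' e t s 1) / 2 * x ^ 2.

Definition clayer_tx (e t s x : R) : R :=
  - layer'' e t s x + layer'' e t s 0 - (layer'' e t s 0 - layer'' e t s 1) * x.

Definition clayer_txx (e t s x : R) : R :=
  - layer''' e t s x - layer'' e t s 0 + layer'' e t s 1.

Definition clayer_prim (e t s x : R) : R :=
  s * e * Uprim ((x - t) / e) - layer e t s 0 * x - layer' e t s 0 * x ^ 2 / 2
  + (layer' e t s 0 - layer' e t s 1) / 6 * x ^ 3.

Definition clayer_mass (e t s : R) : R := clayer_prim e t s 1 - clayer_prim e t s 0.

Definition clayer_mass_t (e t s : R) : R :=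
  - (s * Uprof ((1 - t) / e)) + s * Uprof ((0 - t) / e) + layer' e t s 0
  + layer'' e t s 0 / 2 - (layer'' e t s 0 - layer'' e t s 1) / 6.

Ltac solve_layer_derive :=
  unfold clayer_mass, clayer_mass_t, clayer_prim, clayer, clayer_x, clayer_xx,
    clayer_t, clayer_tx, clayer_txx, layer, layer', layer'', layer''';
  auto_derive;
  [ repeat split; auto using ex_derive_Uprof, ex_derive_Uprof', ex_derive_Uprof'',
      ex_derive_Uprof''', ex_derive_Uprim
  | rewrite ?Derive_Uprof, ?Derive_Uprof', ?Derive_Uprof'', ?Derive_Uprim;
    unfold Rminus, Rdiv; field; auto ].

Section LayerDerivatives.
Variables (e t s : R).
Hypothesis He : e <> 0.

Lemma is_derive_clayer x : is_derive (clayer e t s) x (clayer_x e t s x).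
Proof. solve_layer_derive. Qed.
Lemma is_derive_clayer_x x : is_derive (clayer_x e t s) x (clayer_xx e t s x).
Proof. solve_layer_derive. Qed.
Lemma is_derive_clayer_t x : is_derive (clayer_t e t s) x (clayer_tx e t s x).
Proof. solve_layer_derive. Qed.
Lemma is_derive_clayer_tx x : is_derive (clayer_tx e t s) x (clayer_txx e t s x).
Proof. solve_layer_derive. Qed.
Lemma is_derive_clayer_prim x : is_derive (clayer_prim e t s) x (clayer e t s x).
Proof. solve_layer_derive. Qed.

Lemma ex_derive_clayer_xx x : ex_derive (clayer_xx e t s) x.
Proof. unfold clayer_xx, layer'', layer'. auto_derive. apply ex_derive_Uprof''. Qed.
Lemma ex_derive_clayer_txx x : ex_derive (clayer_txx e t s) x.
Proof. unfold clayer_txx, layer'', layer'''. auto_derive. apply ex_derive_Uprof'''. Qed.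

End LayerDerivatives.

Lemma is_derive_clayer_centre e t s x : e <> 0 ->
  is_derive (fun t => clayer e t s x) t (clayer_t e t s x).
Proof. intros He. solve_layer_derive. Qed.

Lemma is_derive_clayer_mass e t s : e <> 0 ->
  is_derive (fun t => clayer_mass e t s) t (clayer_mass_t e t s).
Proof. intros He. solve_layer_derive. Qed.

Lemma clayer_tx_0 e t s : clayer_tx e t s 0 = 0.
Proof. unfold clayer_tx. ring. Qed.

Lemma clayer_tx_1 e t s : clayer_tx e t s 1 = 0.
Proof. unfold clayer_tx. ring. Qed.

Lemma uh_sum_clayer e N h x :
  uh e N h x = sum_n (fun k => clayer e (h (S k)) ((-1) ^ k) x) N - 1.
Proof.
  unfold uh, betaN, Ssum, Ssum', clayer.
  assert (Hlin : forall (A B C D : nat -> R) n,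
    sum_n (fun k => A k - B k - C k * x + (C k - D k) / 2 * x ^ 2) n
    = sum_n A n - sum_n B n - sum_n C n * x + (sum_n C n - sum_n D n) / 2 * x ^ 2 :> R).
  { intros A B C D n. induction n as [|n IH]; [rewrite !sum_O; ring|].
    rewrite !sum_n_S, IH. field. }
  rewrite Hlin. ring.
Qed.

Definition uh_x (e : R) (N : nat) (h : nat -> R) (x : R) : R :=
  sum_n (fun k => clayer_x e (h (S k)) ((-1) ^ k) x) N.

Definition uh_xx (e : R) (N : nat) (h : nat -> R) (x : R) : R :=
  sum_n (fun k => clayer_xx e (h (S k)) ((-1) ^ k) x) N.

Section LayerSum.
Variables (e : R) (N : nat) (h : nat -> R).
Hypothesis He : e <> 0.

Lemma is_derive_uh x : is_derive (uh e N h) x (uh_x e N h x).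
Proof.
  apply (is_derive_ext (fun x => sum_n (fun k => clayer e (h (S k)) ((-1) ^ k) x) N - 1)).
  { intros y. symmetry. apply uh_sum_clayer. }
  rewrite <- (Rminus_0_r (uh_x e N h x)).
  apply is_derive_Rminus; [|apply (is_derive_const (V := R_NormedModule))].
  apply (is_derive_sum_n (fun k x => clayer e (h (S k)) ((-1) ^ k) x)).
  intros k _. apply is_derive_clayer; auto.
Qed.

Lemma is_derive_uh_x x : is_derive (uh_x e N h) x (uh_xx e N h x).
Proof.
  apply (is_derive_sum_n (fun k x => clayer_x e (h (S k)) ((-1) ^ k) x)).
  intros k _. apply is_derive_clayer_x; auto.
Qed.

Lemma continuous_uh x : continuous (uh e N h) x.
Proof. apply (ex_derive_continuous (V := R_NormedModule)). eexists; apply is_derive_uh. Qed.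

Lemma continuous_uh_xx x : continuous (uh_xx e N h) x.
Proof.
  apply (ex_derive_continuous (V := R_NormedModule)).
  eexists. apply (is_derive_sum_n (fun k x => clayer_xx e (h (S k)) ((-1) ^ k) x)).
  intros k _. apply Derive_correct, ex_derive_clayer_xx; auto.
Qed.

Lemma mass_sum_clayer_mass :
  mass e N h = sum_n (fun k => clayer_mass e (h (S k)) ((-1) ^ k)) N - 1.
Proof.
  unfold mass.
  pose (F := fun x => sum_n (fun k => clayer_prim e (h (S k)) ((-1) ^ k) x) N - x).
  assert (HI : is_RInt (uh e N h) 0 1 (minus (F 1) (F 0))).
  { apply (is_RInt_derive F).
    - intros x _. unfold F. rewrite uh_sum_clayer.
      apply is_derive_Rminus; [|apply (is_derive_id (K := R_AbsRing))].
      apply (is_derive_sum_n (fun k x => clayer_prim e (h (S k)) ((-1) ^ k) x)).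
      intros k _. apply is_derive_clayer_prim; auto.
    - intros x _. apply continuous_uh. }
  rewrite (is_RInt_unique _ _ _ _ HI). unfold clayer_mass. rewrite sum_n_Rminus.
  unfold minus, plus, opp, F; simpl. ring.
Qed.

End LayerSum.

(** * Derivatives in [xi_i] and the mass constraint *)

Definition hshift (N : nat) (xi : nat -> R) (H : (nat -> R) -> R) (i : nat) (s : R) :
  nat -> R := hcat N (shift xi i s) (H (shift xi i s)).

Lemma shift_0 xi i : shift xi i 0 = xi.
Proof.
  apply functional_extensionality. intros j. unfold shift.
  destruct (Nat.eqb j i); ring.
Qed.

Lemma hshift_S N xi H i s k : (1 <= i <= N)%nat -> (k <= N)%nat ->
  hshift N xi H i s (S k) =
  if Nat.eqb k N then H (shift xi i s)
  else if Nat.eqb k (i - 1) then xi i + s else xi (S k).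
Proof.
  intros Hi Hk. unfold hshift, hcat, shift.
  destruct (Nat.eqb_spec (S k) (N + 1)), (Nat.eqb_spec k N); try lia; auto.
  destruct (Nat.eqb_spec (S k) i), (Nat.eqb_spec k (i - 1)); try lia; subst; auto.
Qed.

Lemma sum_n_hshift N xi H i s (Phi : nat -> R -> R) : (1 <= i <= N)%nat ->
  sum_n (fun k => Phi k (hshift N xi H i s (S k))) N =
  sum_n (fun k => if Nat.eqb k (i - 1) then 0 else if Nat.eqb k N then 0
                  else Phi k (xi (S k))) N
  + Phi (i - 1)%nat (xi i + s) + Phi N (H (shift xi i s)) :> R.
Proof.
  intros Hi. rewrite (sum_n_isolate2 _ (i - 1) N N) by lia.
  rewrite (hshift_S N xi H i s (i - 1)), (hshift_S N xi H i s N) by lia.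
  rewrite Nat.eqb_refl. destruct (Nat.eqb_spec (i - 1) N); [lia|]. rewrite Nat.eqb_refl.
  do 2 f_equal. apply sum_n_ext_loc. intros k Hk.
  destruct (Nat.eqb_spec k (i - 1)); auto. destruct (Nat.eqb_spec k N); auto.
  rewrite hshift_S by lia.
  destruct (Nat.eqb_spec k N), (Nat.eqb_spec k (i - 1)); try lia; auto.
Qed.

Lemma is_derive_sum_n_hshift N xi H i (Phi Phi_t : nat -> R -> R) c :
  (1 <= i <= N)%nat ->
  (forall k t, is_derive (Phi k) t (Phi_t k t)) ->
  is_derive (fun s => H (shift xi i s)) 0 c ->
  is_derive (fun s => sum_n (fun k => Phi k (hshift N xi H i s (S k))) N) 0
    (Phi_t (i - 1)%nat (xi i) + c * Phi_t N (H xi)).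
Proof.
  intros Hi HPhi Hc.
  apply (is_derive_ext (fun s =>
    sum_n (fun k => if Nat.eqb k (i - 1) then 0 else if Nat.eqb k N then 0
                    else Phi k (xi (S k))) N
    + Phi (i - 1)%nat (xi i + s) + Phi N (H (shift xi i s)))).
  { intros s. symmetry. apply sum_n_hshift. auto. }
  replace (Phi_t (i - 1)%nat (xi i) + c * Phi_t N (H xi))
    with (0 + 1 * Phi_t (i - 1)%nat (xi i) + c * Phi_t N (H xi)) by ring.
  apply is_derive_Rplus; [apply is_derive_Rplus|].
  - apply (is_derive_const (V := R_NormedModule)).
  - apply (is_derive_comp (Phi (i - 1)%nat) (fun s => xi i + s)).
    + rewrite Rplus_0_r. apply HPhi.
    + rewrite <- (Rplus_0_l 1). apply is_derive_Rplus.
      * apply (is_derive_const (V := R_NormedModule)).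
      * apply (is_derive_id (K := R_AbsRing)).
  - apply (is_derive_comp (Phi N) (fun s => H (shift xi i s))); [|exact Hc].
    rewrite shift_0. apply HPhi.
Qed.

Lemma uxi_i_eq_clayer_t e N H xi i x : e <> 0 -> (1 <= i <= N)%nat ->
  ex_derive (fun s => H (shift xi i s)) 0 ->
  uxi_i e N H xi i x =
  clayer_t e (xi i) ((-1) ^ (i - 1)) x
  + Derive (fun s => H (shift xi i s)) 0 * clayer_t e (H xi) ((-1) ^ N) x.
Proof.
  intros He Hi HH. unfold uxi_i. apply is_derive_unique.
  apply (is_derive_ext (fun s =>
    sum_n (fun k => clayer e (hshift N xi H i s (S k)) ((-1) ^ k) x) N - 1)).
  { intros s. unfold uxi. rewrite uh_sum_clayer. reflexivity. }
  rewrite <- Rminus_0_r.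
  apply is_derive_Rminus; [|apply (is_derive_const (V := R_NormedModule))].
  apply (is_derive_sum_n_hshift N xi H i (fun k t => clayer e t ((-1) ^ k) x)
           (fun k t => clayer_t e t ((-1) ^ k) x)); auto.
  - intros k t. apply is_derive_clayer_centre; auto.
  - apply Derive_correct; auto.
Qed.

Lemma mass_map_derivative e N mu H xi i : e <> 0 -> (1 <= i <= N)%nat ->
  mass_map e N mu H xi ->
  clayer_mass_t e (xi i) ((-1) ^ (i - 1))
  + Derive (fun s => H (shift xi i s)) 0 * clayer_mass_t e (H xi) ((-1) ^ N) = 0.
Proof.
  intros He Hi [[delta [Hdelta Hmass]] HH].
  set (M := fun s => sum_n (fun k => clayer_mass e (hshift N xi H i s (S k)) ((-1) ^ k)) N - 1).
  assert (HM : is_derive M 0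
    (clayer_mass_t e (xi i) ((-1) ^ (i - 1))
     + Derive (fun s => H (shift xi i s)) 0 * clayer_mass_t e (H xi) ((-1) ^ N) - 0)).
  { apply is_derive_Rminus; [|apply (is_derive_const (V := R_NormedModule))].
    apply (is_derive_sum_n_hshift N xi H i (fun k t => clayer_mass e t ((-1) ^ k))
             (fun k t => clayer_mass_t e t ((-1) ^ k))); auto.
    - intros k t. apply is_derive_clayer_mass; auto.
    - apply Derive_correct; auto. }
  assert (HM0 : is_derive M 0 0).
  { apply (is_derive_ext_loc (fun _ => mu)); [|apply (is_derive_const (V := R_NormedModule))].
    exists (mkposreal delta Hdelta). intros s Hs.
    assert (Rabs s < delta).
    { change (Rabs (s - 0) < delta) in Hs. rewrite Rminus_0_r in Hs. exact Hs. }
    unfold M. rewrite <- mass_sum_clayer_mass by auto. symmetry. apply Hmass; auto. }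
  pose proof (is_derive_unique _ _ _ HM) as E1. pose proof (is_derive_unique _ _ _ HM0) as E0.
  rewrite E1 in E0. lra.
Qed.

(** * Exponential tails *)

Definition tail (e d : R) : R := exp (- (sqrt 2 * (d / e))).

Lemma tail_pos e d : 0 < tail e d.
Proof. apply exp_pos. Qed.

Lemma sech2_far e d y : 0 < e -> d / e <= Rabs y -> sech2 y <= 4 * tail e d.
Proof.
  intros He Hy. eapply Rle_trans; [apply sech2_exp_decay|]. unfold tail.
  apply Rmult_le_compat_l; [lra|]. apply exp_le_exp. pose proof sqrt2_pos.
  apply Ropp_le_contravar, Rmult_le_compat_l; lra.
Qed.

Lemma sech2_mul_sech2_far e d p q x : 0 < e -> p + d <= q ->
  sech2 ((x - p) / e) * sech2 ((x - q) / e) <= 16 * tail e d.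
Proof.
  intros He Hpq. pose proof sqrt2_pos.
  pose proof (sech2_pos ((x - p) / e)). pose proof (sech2_pos ((x - q) / e)).
  eapply Rle_trans.
  { apply Rmult_le_compat; [lra | lra | apply sech2_exp_decay | apply sech2_exp_decay]. }
  set (A := - (sqrt 2 * Rabs ((x - p) / e))). set (B := - (sqrt 2 * Rabs ((x - q) / e))).
  replace (4 * exp A * (4 * exp B)) with (16 * exp (A + B)) by (rewrite exp_plus; ring).
  unfold tail, A, B. apply Rmult_le_compat_l; [lra|]. apply exp_le_exp.
  assert (d / e <= (x - p) / e - (x - q) / e).
  { unfold Rdiv. rewrite <- Rmult_minus_distr_r.
    apply Rmult_le_compat_r; [left; apply Rinv_0_lt_compat|]; lra. }
  pose proof (Rle_abs ((x - p) / e)). pose proof (Rle_abs (- ((x - q) / e))).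
  rewrite Rabs_Ropp in H4. nra.
Qed.

Lemma Uprof_sub1_mul_sech2_far e d p q x : 0 < e -> 0 <= d -> p + d <= q ->
  Rabs (Uprof ((x - p) / e) - 1) * sech2 ((x - q) / e) <= 16 * tail e d.
Proof.
  intros He Hd Hpq. pose proof (sech2_pos ((x - q) / e)).
  destruct (Rle_dec p x).
  - eapply Rle_trans; [|apply (sech2_mul_sech2_far e d p q x); auto].
    apply Rmult_le_compat_r; [lra|]. apply Rabs_Uprof_sub1_le.
    apply Rdiv_le_0_compat; lra.
  - assert (Rabs (Uprof ((x - p) / e) - 1) <= 2).
    { pose proof (Rabs_Uprof_le1 ((x - p) / e)) as HU.
      apply Rabs_le. apply Rabs_le_between in HU. lra. }
    assert (sech2 ((x - q) / e) <= 4 * tail e d).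
    { apply sech2_far; auto. rewrite Rabs_left.
      - unfold Rdiv. rewrite Ropp_mult_distr_l.
        apply Rmult_le_compat_r; [left; apply Rinv_0_lt_compat|]; lra.
      - unfold Rdiv. apply Rmult_neg_pos; [lra | apply Rinv_0_lt_compat; lra]. }
    pose proof (tail_pos e d). pose proof (Rabs_pos (Uprof ((x - p) / e) - 1)). nra.
Qed.

Lemma Uprof_add1_mul_sech2_far e d p q x : 0 < e -> 0 <= d -> p + d <= q ->
  Rabs (Uprof ((x - q) / e) + 1) * sech2 ((x - p) / e) <= 16 * tail e d.
Proof.
  intros He Hd Hpq.
  replace ((x - q) / e) with (- ((- x - - q) / e)) by (field; lra).
  replace ((x - p) / e) with (- ((- x - - p) / e)) by (field; lra).
  rewrite Uprof_opp, sech2_opp.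
  replace (- Uprof ((- x - - q) / e) + 1) with (- (Uprof ((- x - - q) / e) - 1)) by ring.
  rewrite Rabs_Ropp. apply Uprof_sub1_mul_sech2_far; auto. lra.
Qed.

Section SingleLayer.
Variables (e d t s : R).
Hypothesis He : 0 < e < 1.
Hypothesis Hd : 0 < d.
Hypothesis Ht : d <= t <= 1 - d.
Hypothesis Hs : Rabs s = 1.

Local Notation T := (tail e d).

Lemma scaled_dist_0 : d / e <= Rabs ((0 - t) / e).
Proof.
  rewrite Rabs_left by (unfold Rdiv; apply Rmult_neg_pos; [|apply Rinv_0_lt_compat]; lra).
  unfold Rdiv. rewrite Ropp_mult_distr_l.
  apply Rmult_le_compat_r; [left; apply Rinv_0_lt_compat|]; lra.
Qed.

Lemma scaled_dist_1 : d / e <= Rabs ((1 - t) / e).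
Proof.
  rewrite Rabs_right by (apply Rle_ge, Rdiv_le_0_compat; lra).
  apply Rmult_le_compat_r; [left; apply Rinv_0_lt_compat|]; lra.
Qed.

Lemma Rabs_layer_le x : Rabs (layer e t s x) <= 1.
Proof. unfold layer. rewrite Rabs_mult, Hs, Rmult_1_l. apply Rabs_Uprof_le1. Qed.

Lemma Rabs_layer'_le x : Rabs (layer' e t s x) <= sech2 ((x - t) / e) / e.
Proof.
  unfold layer', Rdiv. rewrite !Rabs_mult, Hs, Rmult_1_l, (Rabs_pos_eq (/ e))
    by (left; apply Rinv_0_lt_compat; lra).
  apply Rmult_le_compat_r; [left; apply Rinv_0_lt_compat; lra | apply Rabs_Uprof'_le].
Qed.

Lemma Rabs_layer''_le x : Rabs (layer'' e t s x) <= sech2 ((x - t) / e) / e ^ 2.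
Proof.
  unfold layer'', Rdiv. rewrite !Rabs_mult, Hs, Rmult_1_l, (Rabs_pos_eq (/ e ^ 2))
    by (left; apply Rinv_0_lt_compat, pow_lt; lra).
  apply Rmult_le_compat_r; [left; apply Rinv_0_lt_compat, pow_lt; lra|].
  apply Rabs_Uprof''_le.
Qed.

Lemma Uprof_at_0 : Rabs (Uprof ((0 - t) / e) + 1) <= 4 * T.
Proof.
  eapply Rle_trans; [apply Rabs_Uprof_add1_le|].
  - unfold Rdiv. apply Rmult_le_0_r; [|left; apply Rinv_0_lt_compat]; lra.
  - apply sech2_far; [lra | apply scaled_dist_0].
Qed.

Lemma Uprof_at_1 : Rabs (Uprof ((1 - t) / e) - 1) <= 4 * T.
Proof.
  eapply Rle_trans; [apply Rabs_Uprof_sub1_le|].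
  - apply Rdiv_le_0_compat; lra.
  - apply sech2_far; [lra | apply scaled_dist_1].
Qed.

Lemma layer_at_0 : Rabs (layer e t s 0 + s) <= 4 * T.
Proof.
  unfold layer. replace (s * Uprof ((0 - t) / e) + s) with (s * (Uprof ((0 - t) / e) + 1))
    by ring.
  rewrite Rabs_mult, Hs, Rmult_1_l. apply Uprof_at_0.
Qed.

Lemma layer'_at_0 : Rabs (layer' e t s 0) <= 4 * T / e.
Proof.
  eapply Rle_trans; [apply Rabs_layer'_le|]. apply Rmult_le_compat_r;
    [left; apply Rinv_0_lt_compat; lra | apply sech2_far; [lra | apply scaled_dist_0]].
Qed.

Lemma layer'_at_1 : Rabs (layer' e t s 1) <= 4 * T / e.
Proof.
  eapply Rle_trans; [apply Rabs_layer'_le|]. apply Rmult_le_compat_r;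
    [left; apply Rinv_0_lt_compat; lra | apply sech2_far; [lra | apply scaled_dist_1]].
Qed.

Lemma layer''_at_0 : Rabs (layer'' e t s 0) <= 4 * T / e ^ 2.
Proof.
  eapply Rle_trans; [apply Rabs_layer''_le|]. apply Rmult_le_compat_r;
    [left; apply Rinv_0_lt_compat, pow_lt; lra | apply sech2_far; [lra | apply scaled_dist_0]].
Qed.

Lemma layer''_at_1 : Rabs (layer'' e t s 1) <= 4 * T / e ^ 2.
Proof.
  eapply Rle_trans; [apply Rabs_layer''_le|]. apply Rmult_le_compat_r;
    [left; apply Rinv_0_lt_compat, pow_lt; lra | apply sech2_far; [lra | apply scaled_dist_1]].
Qed.

Lemma clayer_near_layer x : 0 <= x <= 1 ->
  Rabs (clayer e t s x - (layer e t s x - layer e t s 0)) <= 8 * T / e.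
Proof.
  intros Hx. unfold clayer.
  replace (_ - _) with ((- layer' e t s 0) * x + ((layer' e t s 0 - layer' e t s 1) / 2) * x ^ 2)
    by ring.
  replace (8 * T / e) with (4 * T / e + 4 * T / e) by (field; lra).
  apply Rabs_lin_quad_le; auto.
  - rewrite Rabs_Ropp. apply layer'_at_0.
  - apply Rabs_half_diff_le; [apply layer'_at_0 | apply layer'_at_1].
Qed.

Lemma clayer_t_near_layer' x : 0 <= x <= 1 ->
  Rabs (clayer_t e t s x + layer' e t s x) <= 12 * T / e ^ 2.
Proof.
  intros Hx. unfold clayer_t.
  replace (_ + layer' e t s x) with (layer' e t s 0 + (layer'' e t s 0 * x
    + (- ((layer'' e t s 0 - layer'' e t s 1) / 2)) * x ^ 2)) by ring.
  eapply Rle_trans; [apply Rabs_triang|].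
  assert (Rabs (layer'' e t s 0 * x + - ((layer'' e t s 0 - layer'' e t s 1) / 2) * x ^ 2)
          <= 4 * T / e ^ 2 + 4 * T / e ^ 2).
  { apply Rabs_lin_quad_le; auto; [apply layer''_at_0|].
    rewrite Rabs_Ropp. apply Rabs_half_diff_le; [apply layer''_at_0 | apply layer''_at_1]. }
  pose proof layer'_at_0.
  pose proof (Rle_div_sq_lt1 (4 * T) e ltac:(pose proof (tail_pos e d); lra) He).
  lra.
Qed.

Lemma Rabs_clayer_t_le x : 0 <= x <= 1 ->
  Rabs (clayer_t e t s x) <= sech2 ((x - t) / e) / e + 12 * T / e ^ 2.
Proof.
  intros Hx. pose proof (clayer_t_near_layer' x Hx). pose proof (Rabs_layer'_le x).
  pose proof (Rabs_triang (clayer_t e t s x + layer' e t s x) (- layer' e t s x)).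
  rewrite Rabs_Ropp, Rplus_assoc, Rplus_opp_r, Rplus_0_r in H1. lra.
Qed.

Lemma clayer_mass_t_near_sign : Rabs (clayer_mass_t e t s + 2 * s) <= 16 * T / e ^ 2.
Proof.
  unfold clayer_mass_t.
  replace (_ + 2 * s) with ((- s) * (Uprof ((1 - t) / e) - 1) + s * (Uprof ((0 - t) / e) + 1)
    + layer' e t s 0 + (layer'' e t s 0 * (1 / 3) + layer'' e t s 1 * (1 / 6))) by field.
  pose proof (tail_pos e d) as HT.
  pose proof (Rle_div_lt1 (4 * T) e ltac:(lra) He).
  pose proof (Rle_div_sq_lt1 (4 * T) e ltac:(lra) He).
  pose proof layer'_at_0. pose proof layer''_at_0. pose proof layer''_at_1.
  assert (Rabs ((- s) * (Uprof ((1 - t) / e) - 1)) <= 4 * T).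
  { rewrite Rabs_mult, Rabs_Ropp, Hs, Rmult_1_l. apply Uprof_at_1. }
  assert (Rabs (s * (Uprof ((0 - t) / e) + 1)) <= 4 * T).
  { rewrite Rabs_mult, Hs, Rmult_1_l. apply Uprof_at_0. }
  assert (Rabs (layer'' e t s 0 * (1 / 3) + layer'' e t s 1 * (1 / 6)) <= 4 * T / e ^ 2).
  { eapply Rle_trans; [apply Rabs_triang|].
    rewrite !Rabs_mult, (Rabs_pos_eq (1 / 3)), (Rabs_pos_eq (1 / 6)) by lra. lra. }
  pose proof (Rabs_triang ((- s) * (Uprof ((1 - t) / e) - 1)) (s * (Uprof ((0 - t) / e) + 1))).
  pose proof (Rabs_triang ((- s) * (Uprof ((1 - t) / e) - 1) + s * (Uprof ((0 - t) / e) + 1))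
                (layer' e t s 0)).
  pose proof (Rabs_triang ((- s) * (Uprof ((1 - t) / e) - 1) + s * (Uprof ((0 - t) / e) + 1)
                + layer' e t s 0) (layer'' e t s 0 * (1 / 3) + layer'' e t s 1 * (1 / 6))).
  unfold Rdiv in *. lra.
Qed.

Lemma f_layer x : Defs.f (layer e t s x) = s * Defs.f (Uprof ((x - t) / e)).
Proof.
  assert (Hs2 : s ^ 2 = 1) by (rewrite <- pow2_abs, Hs; ring).
  unfold Defs.f, layer.
  replace ((s * Uprof ((x - t) / e)) ^ 3) with (s ^ 2 * s * Uprof ((x - t) / e) ^ 3) by ring.
  rewrite Hs2. ring.
Qed.

(* Each layer solves [e^2 u'' = f(u)]; only the boundary correction leaves a residual. *)
Lemma clayer_xx_residual x :
  Rabs (e ^ 2 * clayer_xx e t s x - Defs.f (layer e t s x)) <= 8 * T.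
Proof.
  unfold clayer_xx. rewrite f_layer.
  replace (_ - _) with (e * (e * (layer' e t s 0 - layer' e t s 1)))
    by (unfold layer'', Uprof''; field; lra).
  rewrite !Rabs_mult, (Rabs_pos_eq e) by lra.
  assert (e * Rabs (layer' e t s 0 - layer' e t s 1) <= 8 * T).
  { pose proof (Rabs_triang (layer' e t s 0) (- layer' e t s 1)). rewrite Rabs_Ropp in H.
    pose proof layer'_at_0. pose proof layer'_at_1.
    replace (8 * T) with (e * (8 * T / e)) by (field; lra).
    apply Rmult_le_compat_l; [lra|]. unfold Rminus, Rdiv in *. lra. }
  pose proof (Rabs_pos (layer' e t s 0 - layer' e t s 1)).
  pose proof (tail_pos e d). nra.
Qed.

Lemma clayer_txx_residual x :
  Rabs (e ^ 2 * clayer_txx e t s x + fprime (layer e t s x) * layer' e t s x) <= 8 * T.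
Proof.
  assert (Hs2 : s ^ 2 = 1) by (rewrite <- pow2_abs, Hs; ring).
  unfold clayer_txx.
  replace (_ + _) with (e ^ 2 * (- layer'' e t s 0 + layer'' e t s 1)).
  2:{ unfold layer''', Uprof''', fprime, layer, layer'.
      replace ((s * Uprof ((x - t) / e)) ^ 2) with (s ^ 2 * Uprof ((x - t) / e) ^ 2) by ring.
      rewrite Hs2. field. lra. }
  rewrite Rabs_mult, (Rabs_pos_eq (e ^ 2)) by (apply pow_le; lra).
  pose proof layer''_at_0. pose proof layer''_at_1.
  pose proof (Rabs_triang (- layer'' e t s 0) (layer'' e t s 1)). rewrite Rabs_Ropp in H1.
  replace (8 * T) with (e ^ 2 * (8 * T / e ^ 2)) by (field; lra).
  apply Rmult_le_compat_l; [apply pow_le; lra|]. unfold Rdiv in *. lra.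
Qed.

End SingleLayer.

(** * Well-separated layers *)

Record layer_config (e d : R) (N : nat) (h : nat -> R) : Prop := {
  cfg_eps : 0 < e < 1;
  cfg_gap : 0 < d;
  cfg_tail : 16 * tail e d <= e ^ 2;
  cfg_inside : forall k, (k <= N)%nat -> d <= h (S k) <= 1 - d;
  cfg_sep : forall k l, (k < l)%nat -> (l <= N)%nat -> h (S k) + d <= h (S l) }.

Arguments cfg_eps {e d N h}.
Arguments cfg_gap {e d N h}.
Arguments cfg_tail {e d N h}.
Arguments cfg_inside {e d N h}.
Arguments cfg_sep {e d N h}.

Definition uh_residual (e : R) (N : nat) (h : nat -> R) (x : R) : R :=
  e ^ 2 * uh_xx e N h x - Defs.f (uh e N h x).

Definition Ku (N : nat) : R := 3 * INR (S N) + 1.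

Definition Kf (N : nat) : R := 2 + Ku N + Ku N ^ 2.

Definition Kres (N : nat) : R := 2 * INR (S N) + Ku N ^ 3 + Ku N.

Definition Klin (N : nat) : R := 84 * (Ku N + 1) * INR (S N) + 8 + 12 * (3 * Ku N ^ 2 + 1).

Definition Kres_t (N : nat) : R :=
  24 * INR (S N) + 28 * Kf N * INR (S N) + 12 * Kres N.

Lemma constants_nonneg N :
  1 <= Ku N /\ 0 <= Kf N /\ 0 <= Kres N /\ 0 <= Klin N /\ 0 <= Kres_t N.
Proof.
  pose proof (pos_INR (S N)). assert (1 <= Ku N) by (unfold Ku; lra).
  assert (0 <= Kf N) by (unfold Kf; nra). assert (0 <= Kres N) by (unfold Kres; nra).
  unfold Klin, Kres_t. repeat split; nra.
Qed.

Section MultiLayer.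
Variables (e d : R) (N : nat) (h : nat -> R).
Hypothesis HC : layer_config e d N h.

Local Notation T := (tail e d).
Local Notation L k x := (layer e (h (S k)) ((-1) ^ k) x).
Local Notation P k x := (sech2 ((x - h (S k)) / e)).

Lemma tail_bounds : 0 < T /\ T <= T / e /\ T / e <= T / e ^ 2 /\ T / e ^ 2 <= 1 / 16.
Proof.
  pose proof (cfg_eps HC). pose proof (tail_pos e d). pose proof (cfg_tail HC).
  split; [lra|]. split; [apply Rle_div_lt1; lra|]. split; [apply Rle_div_sq_lt1; lra|].
  apply Rmult_le_reg_r with (e ^ 2); [apply pow_lt; lra|].
  replace (T / e ^ 2 * e ^ 2) with T by (field; lra). lra.
Qed.

Lemma layer_params k : (k <= N)%nat ->
  d <= h (S k) <= 1 - d /\ Rabs ((-1) ^ k) = 1.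
Proof. intros Hk. split; [apply (cfg_inside HC k Hk) | apply Rabs_sign]. Qed.

Lemma clayer_mass_t_layer k : (k <= N)%nat ->
  Rabs (clayer_mass_t e (h (S k)) ((-1) ^ k) + 2 * (-1) ^ k) <= 1.
Proof.
  intros Hk. pose proof (cfg_eps HC). destruct (layer_params k Hk) as [Hhk Hsk].
  destruct tail_bounds as [_ [_ [_ HT16]]].
  eapply Rle_trans; [apply (clayer_mass_t_near_sign e d); auto; apply (cfg_gap HC)|].
  unfold Rdiv in *. lra.
Qed.

Lemma sech2_mul_distinct_layers k a x : (k <= N)%nat -> (a <= N)%nat -> k <> a ->
  P k x * P a x <= 16 * T.
Proof.
  intros Hk Ha Hka. pose proof (cfg_eps HC). destruct (Nat.lt_ge_cases k a).
  - apply sech2_mul_sech2_far; [lra | apply (cfg_sep HC); lia].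
  - rewrite Rmult_comm. apply sech2_mul_sech2_far; [lra | apply (cfg_sep HC); lia].
Qed.

(* Near the [a]-th layer, the [k]-th corrected layer sits on its plateau:
   [2 (-1)^k] if it lies to the left, [0] to the right, and [(-1)^a + L a x] if [k = a]. *)
Let plateau (a k : nat) (x : R) : R :=
  if Nat.ltb k a then 2 * (-1) ^ k else if Nat.eqb k a then (-1) ^ k + L a x else 0.

Lemma clayer_sub_plateau a x k : (a <= N)%nat -> (k <= N)%nat -> 0 <= x <= 1 ->
  Rabs (clayer e (h (S k)) ((-1) ^ k) x - plateau a k x) * P a x <= 28 * T / e.
Proof.
  intros Ha Hk Hx. pose proof (cfg_eps HC) as He. destruct (layer_params k Hk) as [Hhk Hsk].
  destruct tail_bounds as [HT [HTe _]].
  set (C := clayer e (h (S k)) ((-1) ^ k) x - (L k x - L k 0)).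
  assert (HCb : Rabs C <= 8 * T / e) by (apply clayer_near_layer; auto; apply (cfg_gap HC)).
  assert (HB : Rabs (L k 0 + (-1) ^ k) <= 4 * T) by (apply layer_at_0; auto; apply (cfg_gap HC)).
  assert (Hjump : exists J, clayer e (h (S k)) ((-1) ^ k) x - plateau a k x
                              = J - (L k 0 + (-1) ^ k) + C /\ Rabs J * P a x <= 16 * T).
  { unfold plateau, C. destruct (Nat.ltb_spec k a); [|destruct (Nat.eqb_spec k a)].
    - exists (L k x - (-1) ^ k). split; [ring|].
      unfold layer. rewrite <- (Rmult_1_r ((-1) ^ k)) at 2. rewrite <- Rmult_minus_distr_l.
      rewrite Rabs_mult, Hsk, Rmult_1_l.
      apply Uprof_sub1_mul_sech2_far; [lra | left; apply (cfg_gap HC) | apply (cfg_sep HC); lia].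
    - subst k. exists 0. split; [ring|]. rewrite Rabs_R0, Rmult_0_l. lra.
    - exists (L k x + (-1) ^ k). split; [ring|].
      unfold layer. rewrite <- (Rmult_1_r ((-1) ^ k)) at 2. rewrite <- Rmult_plus_distr_l.
      rewrite Rabs_mult, Hsk, Rmult_1_l.
      apply Uprof_add1_mul_sech2_far; [lra | left; apply (cfg_gap HC) | apply (cfg_sep HC); lia]. }
  destruct Hjump as [J [-> HJ]].
  pose proof (sech2_pos ((x - h (S a)) / e)). pose proof (sech2_le1 ((x - h (S a)) / e)).
  pose proof (Rabs_triang (J - (L k 0 + (-1) ^ k)) C).
  pose proof (Rabs_triang J (- (L k 0 + (-1) ^ k))). rewrite Rabs_Ropp in H2.
  pose proof (Rabs_pos (L k 0 + (-1) ^ k)). pose proof (Rabs_pos C).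
  assert (Rabs (L k 0 + (-1) ^ k) * P a x <= 4 * T) by nra.
  assert (Rabs C * P a x <= 8 * T / e) by nra.
  unfold Rdiv in *. unfold Rminus in *. nra.
Qed.

Lemma uh_sub_layer_sum a x : (a <= N)%nat ->
  uh e N h x - L a x = sum_n (fun k => clayer e (h (S k)) ((-1) ^ k) x - plateau a k x) N.
Proof.
  intros Ha. rewrite sum_n_Rminus, uh_sum_clayer.
  rewrite (sum_n_ext_loc (fun k => plateau a k x) (fun k => (if Nat.ltb k a then 2 * (-1) ^ k
            else if Nat.eqb k a then (-1) ^ k else 0) + (if Nat.eqb k a then L a x else 0))).
  - rewrite sum_n_Rplus, alternating_prefix_sum, sum_n_indicator by auto. ring.
  - intros k _. unfold plateau.
    destruct (Nat.ltb_spec k a), (Nat.eqb_spec k a); try lia; subst; simpl; ring.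
Qed.

Lemma uh_near_layer a x : (a <= N)%nat -> 0 <= x <= 1 ->
  Rabs (uh e N h x - L a x) * P a x <= INR (S N) * (28 * T / e).
Proof.
  intros Ha Hx. rewrite uh_sub_layer_sum by auto.
  apply Rabs_sum_n_mul_le; [apply sech2_pos|].
  intros k Hk. apply clayer_sub_plateau; auto.
Qed.

Lemma Rabs_uh_le x : 0 <= x <= 1 -> Rabs (uh e N h x) <= Ku N.
Proof.
  intros Hx. pose proof (cfg_eps HC) as He. rewrite uh_sum_clayer. unfold Ku.
  assert (Rabs (sum_n (fun k => clayer e (h (S k)) ((-1) ^ k) x) N) <= INR (S N) * 3).
  { apply Rabs_sum_n_le. intros k Hk. destruct (layer_params k Hk) as [Hhk Hsk].
    destruct tail_bounds as [HT0 [_ [HTe2 HT]]].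
    pose proof (clayer_near_layer e d (h (S k)) ((-1) ^ k) He (cfg_gap HC) Hhk Hsk x Hx).
    pose proof (Rabs_layer_le e (h (S k)) ((-1) ^ k) Hsk x).
    pose proof (Rabs_layer_le e (h (S k)) ((-1) ^ k) Hsk 0).
    assert (tail e d / e <= 1 / 16) by lra.
    pose proof (Rabs_triang (clayer e (h (S k)) ((-1) ^ k) x - (L k x - L k 0)) (L k x - L k 0)).
    pose proof (Rabs_triang (L k x) (- L k 0)). rewrite Rabs_Ropp in H4.
    replace (clayer e (h (S k)) ((-1) ^ k) x - (L k x - L k 0) + (L k x - L k 0))
      with (clayer e (h (S k)) ((-1) ^ k) x) in H3 by ring.
    unfold Rminus, Rdiv in *. lra. }
  pose proof (Rabs_triang (sum_n (fun k => clayer e (h (S k)) ((-1) ^ k) x) N) (Ropp 1)).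
  rewrite Rabs_Ropp, Rabs_R1 in H0. unfold Rminus. lra.
Qed.

Lemma clayer_xx_layer_residual k x : (k <= N)%nat ->
  Rabs (e ^ 2 * clayer_xx e (h (S k)) ((-1) ^ k) x - Defs.f (L k x)) <= 8 * tail e d.
Proof.
  intros Hk. destruct (layer_params k Hk) as [Hhk Hsk].
  apply clayer_xx_residual; auto; [apply (cfg_eps HC) | apply (cfg_gap HC)].
Qed.

Lemma Rabs_f_layer_le k x : (k <= N)%nat -> Rabs (Defs.f (L k x)) <= P k x.
Proof.
  intros Hk. rewrite f_layer by apply Rabs_sign.
  rewrite Rabs_mult, Rabs_sign, Rmult_1_l. apply Rabs_Uprof''_le.
Qed.

Lemma uh_residual_weighted a x : (a <= N)%nat -> 0 <= x <= 1 ->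
  Rabs (uh_residual e N h x) * P a x
  <= INR (S N) * (24 * T) + Kf N * (INR (S N) * (28 * T / e)).
Proof.
  intros Ha Hx. destruct tail_bounds as [HT _].
  pose proof (sech2_pos ((x - h (S a)) / e)) as HPa.
  pose proof (sech2_le1 ((x - h (S a)) / e)) as HPa1.
  set (Rk := fun k => e ^ 2 * clayer_xx e (h (S k)) ((-1) ^ k) x
                      - (if Nat.eqb k a then Defs.f (L a x) else 0)).
  assert (Hsplit : uh_residual e N h x
                   = sum_n Rk N + (Defs.f (L a x) - Defs.f (uh e N h x))).
  { unfold uh_residual, Rk, uh_xx. rewrite sum_n_Rminus, sum_n_indicator by auto.
    rewrite <- sum_n_Rmult_l. ring. }
  assert (Hlayers : Rabs (sum_n Rk N) * P a x <= INR (S N) * (24 * T)).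
  { apply Rabs_sum_n_mul_le; [exact HPa|]. intros k Hk. unfold Rk.
    pose proof (clayer_xx_layer_residual k x Hk).
    destruct (Nat.eqb_spec k a) as [-> | Hka]; [nra|].
    rewrite Rminus_0_r. pose proof (Rabs_f_layer_le k x Hk).
    pose proof (sech2_mul_distinct_layers k a x Hk Ha Hka).
    pose proof (Rabs_triang (e ^ 2 * clayer_xx e (h (S k)) ((-1) ^ k) x - Defs.f (L k x))
                  (Defs.f (L k x))).
    rewrite Rplus_comm, Rplus_minus in H2.
    pose proof (sech2_pos ((x - h (S k)) / e)). pose proof (Rabs_pos (Defs.f (L k x))). nra. }
  assert (Hnonlin : Rabs (Defs.f (L a x) - Defs.f (uh e N h x)) * P a x
                    <= Kf N * (INR (S N) * (28 * T / e))).
  { pose proof (Rabs_f_sub_le (L a x) (uh e N h x) (Ku N)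
      (Rabs_layer_le e (h (S a)) ((-1) ^ a) (Rabs_sign a) x) (Rabs_uh_le x Hx)).
    pose proof (uh_near_layer a x Ha Hx). rewrite Rabs_minus_sym in H0.
    destruct (constants_nonneg N) as [_ [HKf _]].
    apply Rle_trans with (Kf N * Rabs (L a x - uh e N h x) * P a x).
    - apply Rmult_le_compat_r; [lra | exact H].
    - rewrite Rmult_assoc. apply Rmult_le_compat_l; auto. }
  rewrite Hsplit.
  pose proof (Rabs_triang (sum_n Rk N) (Defs.f (L a x) - Defs.f (uh e N h x))). nra.
Qed.

Lemma Rabs_uh_residual_le x : 0 <= x <= 1 -> Rabs (uh_residual e N h x) <= Kres N.
Proof.
  intros Hx. unfold uh_residual, Kres. destruct tail_bounds as [HT [HTe [HTe2 HT16]]].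
  assert (Rabs (e ^ 2 * uh_xx e N h x) <= INR (S N) * 2).
  { unfold uh_xx. rewrite <- sum_n_Rmult_l. apply Rabs_sum_n_le. intros k Hk.
    pose proof (clayer_xx_layer_residual k x Hk). pose proof (Rabs_f_layer_le k x Hk).
    pose proof (sech2_le1 ((x - h (S k)) / e)).
    pose proof (Rabs_triang (e ^ 2 * clayer_xx e (h (S k)) ((-1) ^ k) x - Defs.f (L k x))
                  (Defs.f (L k x))).
    rewrite Rplus_comm, Rplus_minus in H2. unfold Rdiv in *. lra. }
  pose proof (Rabs_f_le _ _ (Rabs_uh_le x Hx)).
  pose proof (Rabs_triang (e ^ 2 * uh_xx e N h x) (- Defs.f (uh e N h x))).
  rewrite Rabs_Ropp in H1. unfold Rminus. lra.
Qed.

Lemma Rabs_clayer_t_le_2e j x : (j <= N)%nat -> 0 <= x <= 1 ->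
  Rabs (clayer_t e (h (S j)) ((-1) ^ j) x) <= 2 / e.
Proof.
  intros Hj Hx. pose proof (cfg_eps HC) as He. destruct (layer_params j Hj) as [Hhj Hsj].
  destruct tail_bounds as [_ [_ [_ HT16]]].
  pose proof (Rabs_clayer_t_le e d (h (S j)) ((-1) ^ j) He (cfg_gap HC) Hhj Hsj x Hx).
  pose proof (sech2_le1 ((x - h (S j)) / e)).
  assert (1 <= 1 / e) by (apply (Rle_div_lt1 1 e); lra).
  assert (sech2 ((x - h (S j)) / e) / e <= 1 / e).
  { apply Rmult_le_compat_r; [left; apply Rinv_0_lt_compat; lra | exact H0]. }
  unfold Rdiv in *. lra.
Qed.

Lemma fprime_uh_sub_mul_layer' j x : (j <= N)%nat -> 0 <= x <= 1 ->
  Rabs ((fprime (uh e N h x) - fprime (L j x)) * layer' e (h (S j)) ((-1) ^ j) x)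
  <= 84 * (Ku N + 1) * INR (S N) * (T / e ^ 2).
Proof.
  intros Hj Hx. pose proof (cfg_eps HC) as He. destruct (layer_params j Hj) as [Hhj Hsj].
  destruct (constants_nonneg N) as [HKu _].
  set (u := uh e N h x).
  pose proof (Rabs_fprime_sub_le u (L j x) (Ku N) (Rabs_uh_le x Hx) (Rabs_layer_le _ _ _ Hsj x)).
  pose proof (Rabs_layer'_le e (h (S j)) ((-1) ^ j) He Hsj x).
  pose proof (uh_near_layer j x Hj Hx).
  rewrite Rabs_mult.
  apply Rle_trans with (3 * (Ku N + 1) * Rabs (u - L j x) * (P j x / e)).
  { apply Rmult_le_compat; auto using Rabs_pos. }
  replace (3 * (Ku N + 1) * Rabs (u - L j x) * (P j x / e))
    with (3 * (Ku N + 1) * (Rabs (u - L j x) * P j x) / e) by (field; lra).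
  replace (84 * (Ku N + 1) * INR (S N) * (T / e ^ 2))
    with (3 * (Ku N + 1) * (INR (S N) * (28 * T / e)) / e) by (field; lra).
  apply Rmult_le_compat_r; [left; apply Rinv_0_lt_compat; lra|].
  apply Rmult_le_compat_l; [lra | exact H1].
Qed.

Lemma linearized_clayer_t j x : (j <= N)%nat -> 0 <= x <= 1 ->
  Rabs (e ^ 2 * clayer_txx e (h (S j)) ((-1) ^ j) x
        - fprime (uh e N h x) * clayer_t e (h (S j)) ((-1) ^ j) x) <= Klin N * (T / e ^ 2).
Proof.
  intros Hj Hx. pose proof (cfg_eps HC) as He. destruct (layer_params j Hj) as [Hhj Hsj].
  destruct tail_bounds as [HT [HTe [HTe2 _]]].
  pose proof (fprime_uh_sub_mul_layer' j x Hj Hx) as Hdiff.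
  set (u := uh e N h x) in *. set (L1 := layer' e (h (S j)) ((-1) ^ j) x) in *.
  set (r := e ^ 2 * clayer_txx e (h (S j)) ((-1) ^ j) x + fprime (L j x) * L1).
  set (sj := clayer_t e (h (S j)) ((-1) ^ j) x + L1).
  replace (_ - _) with ((fprime u - fprime (L j x)) * L1 + r - fprime u * sj)
    by (unfold r, sj; ring).
  assert (Hr : Rabs r <= 8 * T) by (apply clayer_txx_residual; auto; apply (cfg_gap HC)).
  assert (Hs : Rabs sj <= 12 * T / e ^ 2)
    by (apply clayer_t_near_layer'; auto; apply (cfg_gap HC)).
  assert (Hfs : Rabs (fprime u * sj) <= (3 * Ku N ^ 2 + 1) * (12 * (T / e ^ 2))).
  { rewrite Rabs_mult. apply Rmult_le_compat; try apply Rabs_pos.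
    - apply Rabs_fprime_le, Rabs_uh_le; auto.
    - unfold Rdiv in *. lra. }
  pose proof (Rabs_triang ((fprime u - fprime (L j x)) * L1 + r) (- (fprime u * sj))).
  pose proof (Rabs_triang ((fprime u - fprime (L j x)) * L1) r).
  rewrite Rabs_Ropp in H. unfold Klin. unfold Rminus, Rdiv in *. lra.
Qed.

Lemma clayer_t_mul_residual j x : (j <= N)%nat -> 0 <= x <= 1 ->
  Rabs (clayer_t e (h (S j)) ((-1) ^ j) x * uh_residual e N h x) <= Kres_t N * (T / e ^ 2).
Proof.
  intros Hj Hx. pose proof (cfg_eps HC) as He. destruct (layer_params j Hj) as [Hhj Hsj].
  destruct tail_bounds as [HT [HTe [HTe2 _]]].
  destruct (constants_nonneg N) as [HKu [HKf [HKres _]]]. pose proof (pos_INR (S N)).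
  rewrite Rabs_mult. set (R0 := uh_residual e N h x).
  pose proof (Rabs_clayer_t_le e d (h (S j)) ((-1) ^ j) He (cfg_gap HC) Hhj Hsj x Hx).
  pose proof (uh_residual_weighted j x Hj Hx). pose proof (Rabs_uh_residual_le x Hx).
  fold R0 in H1, H2. pose proof (Rabs_pos R0).
  apply Rle_trans with ((P j x / e + 12 * T / e ^ 2) * Rabs R0).
  { apply Rmult_le_compat_r; auto. }
  assert (Hweighted : P j x / e * Rabs R0
                      <= (24 * INR (S N) + 28 * Kf N * INR (S N)) * (T / e ^ 2)).
  { replace (P j x / e * Rabs R0) with (Rabs R0 * P j x / e) by (field; lra).
    apply Rle_trans with ((INR (S N) * (24 * T) + Kf N * (INR (S N) * (28 * T / e))) / e).
    { apply Rmult_le_compat_r; [left; apply Rinv_0_lt_compat; lra | exact H1]. }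
    replace ((INR (S N) * (24 * T) + Kf N * (INR (S N) * (28 * T / e))) / e)
      with (24 * INR (S N) * (T / e) + 28 * Kf N * INR (S N) * (T / e ^ 2)) by (field; lra).
    assert (24 * INR (S N) * (T / e) <= 24 * INR (S N) * (T / e ^ 2))
      by (apply Rmult_le_compat_l; lra).
    lra. }
  assert (12 * T / e ^ 2 * Rabs R0 <= 12 * Kres N * (T / e ^ 2)).
  { replace (12 * T / e ^ 2 * Rabs R0) with (12 * (T / e ^ 2) * Rabs R0) by (field; lra).
    pose proof (Rle_div_sq_lt1 T e). assert (0 <= T / e ^ 2) by lra. nra. }
  unfold Kres_t. lra.
Qed.

End MultiLayer.

Lemma InOmega_gaps e k0 N h : InOmega e k0 N h ->
  e / rho e k0 / 2 < h 1%nat /\ h (N + 1)%nat < 1 - e / rho e k0 / 2 /\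
  (forall j, (1 <= j <= N)%nat -> h j + e / rho e k0 <= h (S j)).
Proof.
  intros [Hfirst [Hinc [Hlast Hgap]]]. set (D := e / rho e k0).
  split; [|split].
  - specialize (Hgap 0%nat ltac:(lia)).
    replace (hext N h 1) with (h 1%nat) in Hgap
      by (unfold hext; destruct (Nat.eqb_spec 1 (N + 2)); [lia | reflexivity]).
    change (hext N h 0) with (- h 1%nat) in Hgap.
    rewrite Rabs_right in Hgap by lra. fold D in Hgap. lra.
  - specialize (Hgap (N + 1)%nat ltac:(lia)). unfold hext in Hgap.
    replace (S (N + 1)) with (N + 2)%nat in Hgap by lia. rewrite Nat.eqb_refl in Hgap.
    destruct (Nat.eqb_spec (N + 2) 0), (Nat.eqb_spec (N + 1) 0),
      (Nat.eqb_spec (N + 1) (N + 2)); try lia.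
    rewrite Rabs_right in Hgap by lra. fold D in Hgap. lra.
  - intros j Hj. specialize (Hgap j ltac:(lia)). specialize (Hinc j Hj). unfold hext in Hgap.
    destruct (Nat.eqb_spec (S j) 0), (Nat.eqb_spec (S j) (N + 2)),
      (Nat.eqb_spec j 0), (Nat.eqb_spec j (N + 2)); try lia.
    rewrite Rabs_right in Hgap by lra. fold D in Hgap. lra.
Qed.

(* The reflected points [h_0 = - h_1] and [h_(N+2) = 2 - h_(N+1)] of [InOmega] keep the
   layers [e / rho / 2] away from the boundary. *)
Lemma InOmega_layer_bounds e k0 N h : 0 < e -> InOmega e k0 N h ->
  (forall k, (k <= N)%nat -> e / rho e k0 / 2 <= h (S k) <= 1 - e / rho e k0 / 2) /\
  (forall k l, (k < l)%nat -> (l <= N)%nat -> h (S k) + e / rho e k0 / 2 <= h (S l)).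
Proof.
  intros He Hom. destruct (InOmega_gaps e k0 N h Hom) as [Hfirst [Hlast Hstep]].
  set (D := e / rho e k0) in *.
  assert (HD : 0 < D) by (apply Rdiv_lt_0_compat; [|apply exp_pos]; auto).
  assert (Hspread : forall k n, (S k + n <= N + 1)%nat ->
                      h (S k) + D * INR n <= h (S k + n)%nat).
  { intros k n. induction n as [|n IH]; intros Hn.
    - rewrite Nat.add_0_r. simpl. lra.
    - rewrite S_INR. replace (S k + S n)%nat with (S (S k + n)) by lia.
      pose proof (Hstep (S k + n)%nat ltac:(lia)). specialize (IH ltac:(lia)). lra. }
  split.
  - intros k Hk. pose proof (Hspread 0%nat k ltac:(lia)).
    pose proof (Hspread k (N - k)%nat ltac:(lia)).
    replace (S 0 + k)%nat with (S k) in H by lia.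
    replace (S k + (N - k))%nat with (N + 1)%nat in H0 by lia.
    pose proof (pos_INR k). pose proof (pos_INR (N - k)).
    assert (0 <= D * INR k) by (apply Rmult_le_pos; lra).
    assert (0 <= D * INR (N - k)) by (apply Rmult_le_pos; lra).
    split; lra.
  - intros k l Hkl Hl. pose proof (Hspread k (l - k)%nat ltac:(lia)).
    replace (S k + (l - k))%nat with (S l) in H by lia.
    assert (1 <= INR (l - k)) by (apply (le_INR 1); lia). nra.
Qed.

Lemma tail_le_Rpower r k0 : 0 < r -> 0 < k0 ->
  exists e1, 0 < e1 < 1 /\
  forall e, 0 < e < e1 -> tail e (e / rho e k0 / 2) <= Rpower e r.
Proof.
  intros Hr Hk. assert (Hc : 0 < 8 * r / k0 ^ 2) by (apply Rdiv_lt_0_compat; [|apply pow_lt]; lra).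
  exists (exp (- (8 * r / k0 ^ 2))). split.
  { split; [apply exp_pos|]. rewrite <- exp_0. apply exp_increasing. lra. }
  intros e He. unfold tail, rho, Rpower.
  set (z := - ln e).
  assert (Hz : 8 * r / k0 ^ 2 < z).
  { unfold z. assert (ln e < ln (exp (- (8 * r / k0 ^ 2)))) by (apply ln_increasing; lra).
    rewrite ln_exp in H. lra. }
  replace (e / exp (k0 * ln e) / 2 / e) with (/ 2 * exp (k0 * z)).
  2:{ unfold z. replace (k0 * - ln e) with (- (k0 * ln e)) by ring. rewrite exp_Ropp.
      field. split; [apply Rgt_not_eq, exp_pos | lra]. }
  apply exp_le_exp. replace (r * ln e) with (- (r * z)) by (unfold z; ring).
  apply Ropp_le_contravar.
  pose proof (sq_div4_le_exp (k0 * z) ltac:(nra)). pose proof sqrt2_ge1.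
  assert (r <= k0 ^ 2 * z / 8).
  { apply Rmult_le_reg_r with (8 / k0 ^ 2); [apply Rdiv_lt_0_compat; [|apply pow_lt]; lra|].
    replace (k0 ^ 2 * z / 8 * (8 / k0 ^ 2)) with z by (field; lra).
    replace (r * (8 / k0 ^ 2)) with (8 * r / k0 ^ 2) by (field; lra). lra. }
  assert (r * z <= (k0 * z) ^ 2 / 8)
    by (replace ((k0 * z) ^ 2 / 8) with (k0 ^ 2 * z / 8 * z) by field; nra).
  pose proof (exp_pos (k0 * z)). nra.
Qed.

Lemma InOmega_layer_config k0 m : 0 < k0 -> 0 < m ->
  exists e1, 0 < e1 /\ forall e N h, 0 < e < e1 -> InOmega e k0 N h ->
  layer_config e (e / rho e k0 / 2) N h /\
  tail e (e / rho e k0 / 2) / e ^ 2 <= Rpower e (2 + 2 * m).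
Proof.
  intros Hk Hm. destruct (tail_le_Rpower (4 + 2 * m) k0 ltac:(lra) Hk) as [e1 [He1 Htail]].
  exists (Rmin e1 (1 / 4)). split; [apply Rmin_pos; lra|].
  intros e N h He Hom.
  pose proof (Rmin_l e1 (1 / 4)). pose proof (Rmin_r e1 (1 / 4)).
  set (d := e / rho e k0 / 2).
  assert (HT : tail e d <= Rpower e (2 + 2 * m) * e ^ 2).
  { replace (e ^ 2) with (Rpower e 2) by (rewrite <- Rpower_pow by lra; f_equal; simpl; ring).
    rewrite <- Rpower_plus. replace (2 + 2 * m + 2) with (4 + 2 * m) by ring.
    apply Htail. lra. }
  pose proof (tail_pos e d).
  destruct (InOmega_layer_bounds e k0 N h ltac:(lra) Hom) as [Hinside Hsep].
  assert (Hd : 0 < d).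
  { apply Rmult_lt_0_compat; [apply Rdiv_lt_0_compat; [lra | apply exp_pos] | lra]. }
  split.
  - split; auto; [lra|].
    assert (Rpower e (2 + 2 * m) <= e ^ 2).
    { replace (e ^ 2) with (Rpower e 2) by (rewrite <- Rpower_pow by lra; f_equal; simpl; ring).
      apply Rle_Rpower_lt1; lra. }
    assert (e ^ 2 <= 1 / 16) by (simpl; nra).
    assert (0 <= e ^ 2) by apply pow2_ge_0. nra.
  - apply Rmult_le_reg_r with (e ^ 2); [apply pow_lt; lra|].
    replace (tail e d / e ^ 2 * e ^ 2) with (tail e d) by (field; lra). exact HT.
Qed.

(** * Testing [L (u^xi + v)] against a translation mode *)

(* [W L(u + v) = e^2 (W v'' - W'' v) + W L(u) + g v - W (3 u v^2 + v^3)] with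
   [g = e^2 W'' - f'(u) W]; this bounds the last three terms. *)
Lemma Lop_expansion_bound W Lu g U V e l KD Kg K tau : 0 < e -> 0 < l -> 0 <= tau ->
  Rabs (W * Lu) <= 4 * KD * tau -> Rabs g <= 4 * Kg * tau -> Rabs W <= 8 / e -> Rabs U <= K ->
  W * Lu + g * V - W * (3 * U * V ^ 2 + V ^ 3) <=
  (4 * KD + 4 * Kg) * tau + (4 * Kg * tau + 24 * K / e + 8 / (e * l)) * V ^ 2
  + (8 * l / e) * V ^ 4.
Proof.
  intros He Hl Ht HWL Hg HW HU.
  assert (t1 : W * Lu <= 4 * KD * tau) by (pose proof (Rle_abs (W * Lu)); lra).
  assert (t2 : g * V <= 4 * Kg * tau * (1 + V ^ 2)).
  { pose proof (Rle_abs (g * V)). rewrite Rabs_mult in H. pose proof (Rabs_le_1_add_sq V).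
    pose proof (Rabs_pos g). pose proof (Rabs_pos V). pose proof (pow2_ge_0 V).
    apply Rle_trans with (Rabs g * Rabs V); [lra | apply Rmult_le_compat; lra]. }
  assert (t3 : - (W * (3 * U * V ^ 2 + V ^ 3))
               <= 8 / e * (3 * K * V ^ 2 + (V ^ 2 / l + l * V ^ 4))).
  { pose proof (Rle_abs (- (W * (3 * U * V ^ 2 + V ^ 3)))). rewrite Rabs_Ropp, Rabs_mult in H.
    assert (Rabs (3 * U * V ^ 2 + V ^ 3) <= 3 * K * V ^ 2 + (V ^ 2 / l + l * V ^ 4)).
    { eapply Rle_trans; [apply Rabs_triang|]. rewrite !Rabs_mult, (Rabs_pos_eq 3) by lra.
      rewrite <- (RPow_abs V 3), (Rabs_pos_eq (V ^ 2)) by apply pow2_ge_0.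
      pose proof (Rabs_cube_le V l Hl). pose proof (pow2_ge_0 V).
      assert (3 * Rabs U * V ^ 2 <= 3 * K * V ^ 2) by nra. lra. }
    pose proof (Rabs_pos W). pose proof (Rabs_pos (3 * U * V ^ 2 + V ^ 3)).
    apply Rle_trans with (Rabs W * Rabs (3 * U * V ^ 2 + V ^ 3)); [lra|].
    apply Rmult_le_compat; lra. }
  replace ((4 * KD + 4 * Kg) * tau + (4 * Kg * tau + 24 * K / e + 8 / (e * l)) * V ^ 2
           + 8 * l / e * V ^ 4)
    with (4 * KD * tau + 4 * Kg * tau * (1 + V ^ 2)
          + 8 / e * (3 * K * V ^ 2 + (V ^ 2 / l + l * V ^ 4))) by (field; lra).
  lra.
Qed.

(* [uxi_i = tmode (i - 1) (d h_(N+1) / d xi_i)], see [uxi_i_eq_tmode]. *)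
Definition tmode (e : R) (N : nat) (h : nat -> R) (a : nat) (c x : R) : R :=
  clayer_t e (h (S a)) ((-1) ^ a) x + c * clayer_t e (h (S N)) ((-1) ^ N) x.

Definition tmode_x (e : R) (N : nat) (h : nat -> R) (a : nat) (c x : R) : R :=
  clayer_tx e (h (S a)) ((-1) ^ a) x + c * clayer_tx e (h (S N)) ((-1) ^ N) x.

Definition tmode_xx (e : R) (N : nat) (h : nat -> R) (a : nat) (c x : R) : R :=
  clayer_txx e (h (S a)) ((-1) ^ a) x + c * clayer_txx e (h (S N)) ((-1) ^ N) x.

Section TranslationMode.
Variables (e d : R) (N : nat) (h : nat -> R) (a : nat) (c : R).
Hypothesis HC : layer_config e d N h.
Hypothesis Ha : (a <= N)%nat.
Hypothesis Hc : Rabs c <= 3.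

Local Notation W := (tmode e N h a c).
Local Notation tau := (tail e d / e ^ 2).

Lemma tmode_bounds x : 0 <= x <= 1 ->
  Rabs (W x) <= 8 / e /\
  Rabs (W x * uh_residual e N h x) <= 4 * Kres_t N * tau /\
  Rabs (e ^ 2 * tmode_xx e N h a c x - fprime (uh e N h x) * W x) <= 4 * Klin N * tau.
Proof.
  intros Hx. pose proof (cfg_eps HC). unfold tmode, tmode_xx. split; [|split].
  - replace (8 / e) with (4 * (2 / e)) by (field; lra).
    apply Rabs_comb_le; auto; apply (Rabs_clayer_t_le_2e e d N h HC); auto.
  - rewrite Rmult_plus_distr_r, Rmult_assoc, (Rmult_assoc 4).
    apply Rabs_comb_le; auto; apply (clayer_t_mul_residual e d N h HC); auto.
  - replace (_ - _) with
      ((e ^ 2 * clayer_txx e (h (S a)) ((-1) ^ a) x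
        - fprime (uh e N h x) * clayer_t e (h (S a)) ((-1) ^ a) x)
       + c * (e ^ 2 * clayer_txx e (h (S N)) ((-1) ^ N) x
              - fprime (uh e N h x) * clayer_t e (h (S N)) ((-1) ^ N) x)) by ring.
    rewrite (Rmult_assoc 4). apply Rabs_comb_le; auto; apply (linearized_clayer_t e d N h HC); auto.
Qed.

Lemma eps_neq0 : e <> 0.
Proof. pose proof (cfg_eps HC). lra. Qed.

Lemma is_derive_tmode x : is_derive W x (tmode_x e N h a c x).
Proof.
  pose proof eps_neq0.
  apply is_derive_Rplus; [|apply is_derive_scal]; apply is_derive_clayer_t; auto.
Qed.

Lemma is_derive_tmode_x x : is_derive (tmode_x e N h a c) x (tmode_xx e N h a c x).
Proof.
  pose proof eps_neq0.
  apply is_derive_Rplus; [|apply is_derive_scal]; apply is_derive_clayer_tx; auto.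
Qed.

Lemma continuous_tmode x : continuous W x.
Proof. eapply continuous_of_is_derive, is_derive_tmode. Qed.

Lemma continuous_tmode_xx x : continuous (tmode_xx e N h a c) x.
Proof.
  pose proof eps_neq0.
  apply continuous_Rplus; [|apply (continuous_Rmult (fun _ => c))];
    try apply continuous_Rconst;
    apply (ex_derive_continuous (V := R_NormedModule)); apply ex_derive_clayer_txx; auto.
Qed.

Variable v : R -> R.
Hypothesis Hv : regular_neumann v.

Local Notation v'' x := (Derive (Derive v) x).

Lemma continuous_v x : continuous v x.
Proof. apply (ex_derive_continuous (V := R_NormedModule)), Hv. Qed.

Lemma continuous_v'' x : 0 <= x <= 1 -> continuous (Derive (Derive v)) x.
Proof. apply Hv. Qed.

Local Hint Resolve eps_neq0 continuous_tmode continuous_tmode_xx continuous_v continuous_v''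
  continuous_uh continuous_uh_xx : core.

Lemma RInt_tmode_Green : RInt (fun x => W x * v'' x - tmode_xx e N h a c x * v x) 0 1 = 0.
Proof.
  destruct Hv as [Hv1 [Hv2 [_ [Hv0 Hv1']]]].
  apply (RInt_Green_Neumann W (tmode_x e N h a c) (tmode_xx e N h a c) v (Derive v)
           (Derive (Derive v))); auto.
  - intros x _. apply is_derive_tmode.
  - intros x _. apply is_derive_tmode_x.
  - intros x _. apply Derive_correct, Hv1.
  - intros x _. apply Derive_correct, Hv2.
  - intros x Hx. solve_continuous.
  - unfold tmode_x. rewrite !clayer_tx_0. ring.
  - unfold tmode_x. rewrite !clayer_tx_1. ring.
Qed.

Variable l : R.
Hypothesis Hl : 0 < l.

Lemma tmode_Lop_pointwise x : 0 <= x <= 1 ->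
  W x * (e ^ 2 * (uh_xx e N h x + v'' x) - Defs.f (uh e N h x + v x))
  <= e ^ 2 * (W x * v'' x - tmode_xx e N h a c x * v x)
     + ((4 * Kres_t N + 4 * Klin N) * tau
        + (4 * Klin N * tau + 24 * Ku N / e + 8 / (e * l)) * v x ^ 2 + (8 * l / e) * v x ^ 4).
Proof.
  intros Hx. pose proof (cfg_eps HC). destruct (tmode_bounds x Hx) as [HW [HWres Hlin]].
  set (U := uh e N h x). set (V := v x).
  set (g := e ^ 2 * tmode_xx e N h a c x - fprime U * W x).
  replace (W x * (e ^ 2 * (uh_xx e N h x + v'' x) - Defs.f (U + V)))
    with (e ^ 2 * (W x * v'' x - tmode_xx e N h a c x * V)
          + (W x * uh_residual e N h x + g * V - W x * (3 * U * V ^ 2 + V ^ 3)))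
    by (unfold g, uh_residual, fprime, Defs.f; fold U; ring).
  apply Rplus_le_compat_l.
  apply Lop_expansion_bound; [lra | exact Hl | | exact HWres | exact Hlin | exact HW |].
  - apply Rdiv_le_0_compat; [left; apply tail_pos | apply pow_lt; lra].
  - apply (Rabs_uh_le e d N h HC x Hx).
Qed.

Lemma RInt_tmode_Lop_le :
  RInt (fun x => W x * (e ^ 2 * (uh_xx e N h x + v'' x) - Defs.f (uh e N h x + v x))) 0 1
  <= (4 * Kres_t N + 4 * Klin N) * tau
     + (4 * Klin N * tau + 24 * Ku N / e + 8 / (e * l)) * RInt (fun x => v x ^ 2) 0 1
     + (8 * l / e) * RInt (fun x => v x ^ 4) 0 1.
Proof.
  set (alpha := (4 * Kres_t N + 4 * Klin N) * tau).
  set (beta := 4 * Klin N * tau + 24 * Ku N / e + 8 / (e * l)).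
  set (gamma := 8 * l / e).
  pose proof RInt_tmode_Green as HQ.
  set (Q := fun x => W x * v'' x - tmode_xx e N h a c x * v x) in *.
  assert (HB : RInt (fun x => e ^ 2 * Q x + (alpha + beta * v x ^ 2 + gamma * v x ^ 4)) 0 1
               = alpha + beta * RInt (fun x => v x ^ 2) 0 1 + gamma * RInt (fun x => v x ^ 4) 0 1
               :> R).
  { rewrite RInt_Rplus, RInt_Rmult_l, HQ, !RInt_Rplus, RInt_01_const,
      !RInt_Rmult_l; try (apply ex_RInt_01; intros; unfold Q; solve_continuous).
    ring. }
  rewrite <- HB. apply RInt_le; [lra | | |].
  - apply ex_RInt_01. intros x Hx. unfold Defs.f. solve_continuous.
  - apply ex_RInt_01. intros x Hx. unfold Q. solve_continuous.
  - intros x Hx. apply tmode_Lop_pointwise. lra.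
Qed.
End TranslationMode.

Lemma hcat_layer N xi t i : (1 <= i <= N)%nat -> hcat N xi t (S (i - 1)) = xi i.
Proof.
  intros Hi. unfold hcat. replace (S (i - 1)) with i by lia.
  destruct (Nat.eqb_spec i (N + 1)); [lia | reflexivity].
Qed.

Lemma hcat_last N xi t : hcat N xi t (S N) = t.
Proof. unfold hcat. replace (S N) with (N + 1)%nat by lia. rewrite Nat.eqb_refl. reflexivity. Qed.

Lemma Rabs_root_coef_le A B c s s' : Rabs s = 1 -> Rabs s' = 1 ->
  Rabs (A + 2 * s) <= 1 -> Rabs (B + 2 * s') <= 1 -> A + c * B = 0 -> Rabs c <= 3.
Proof.
  intros Hs Hs' HA HB Hc.
  assert (HA3 : Rabs A <= 3).
  { pose proof (Rabs_triang (A + 2 * s) (- (2 * s))).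
    rewrite Rabs_Ropp, Rabs_mult, Hs, (Rabs_pos_eq 2) in H by lra.
    replace (A + 2 * s + - (2 * s)) with A in H by ring. lra. }
  assert (HB1 : 1 <= Rabs B).
  { pose proof (Rabs_triang_inv (2 * s') (- B)).
    rewrite Rabs_Ropp, Rabs_mult, Hs', (Rabs_pos_eq 2) in H by lra.
    replace (2 * s' - - B) with (B + 2 * s') in H by ring. lra. }
  assert (Rabs c * Rabs B = Rabs A).
  { rewrite <- Rabs_mult. replace (c * B) with (- A) by lra. apply Rabs_Ropp. }
  pose proof (Rabs_pos c). nra.
Qed.

(* Differentiating the mass constraint gives [clayer_mass_t_i + c clayer_mass_t_(N+1) = 0],
   and both derivatives are [-2 (-1)^k] up to [1]. *)
Lemma shift_rate_bound e d N mu H xi i :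
  layer_config e d N (hcat N xi (H xi)) -> (1 <= i <= N)%nat -> mass_map e N mu H xi ->
  Rabs (Derive (fun s => H (shift xi i s)) 0) <= 3.
Proof.
  intros HC Hi Hmass. pose proof (cfg_eps HC).
  pose proof (clayer_mass_t_layer e d N _ HC (i - 1) ltac:(lia)) as HA.
  pose proof (clayer_mass_t_layer e d N _ HC N (le_n N)) as HB.
  rewrite hcat_layer in HA by auto. rewrite hcat_last in HB.
  apply (Rabs_root_coef_le _ _ _ _ _ (Rabs_sign (i - 1)) (Rabs_sign N) HA HB).
  apply (mass_map_derivative e N mu H xi i ltac:(lra) Hi Hmass).
Qed.

Lemma uxi_i_eq_tmode e N mu H xi i x : e <> 0 -> (1 <= i <= N)%nat -> mass_map e N mu H xi ->
  uxi_i e N H xi i x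
  = tmode e N (hcat N xi (H xi)) (i - 1) (Derive (fun s => H (shift xi i s)) 0) x.
Proof.
  intros He Hi [_ HH]. rewrite uxi_i_eq_clayer_t by auto. unfold tmode.
  rewrite hcat_layer, hcat_last by auto. replace (S (i - 1) - 1)%nat with (i - 1)%nat by lia.
  reflexivity.
Qed.

Lemma Lop_uxi_add e N H xi v x : e <> 0 -> regular_neumann v ->
  Lop e (fun y => uxi e N H xi y + v y) x
  = e ^ 2 * (uh_xx e N (hcat N xi (H xi)) x + Derive (Derive v) x)
    - Defs.f (uh e N (hcat N xi (H xi)) x + v x).
Proof.
  intros He [Hv1 [Hv2 _]]. set (h := hcat N xi (H xi)). unfold Lop. do 2 f_equal.
  change (Derive_n (fun y => uxi e N H xi y + v y) 2 x)
    with (Derive (fun y => Derive (fun z => uh e N h z + v z) y) x).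
  rewrite (Derive_ext (fun y => Derive (fun z => uh e N h z + v z) y)
                      (fun y => uh_x e N h y + Derive v y)).
  - rewrite Derive_plus; [| eexists; apply is_derive_uh_x; auto | apply Hv2].
    f_equal. apply is_derive_unique, is_derive_uh_x. auto.
  - intros y. rewrite Derive_plus; [| eexists; apply is_derive_uh; auto | apply Hv1].
    f_equal. apply is_derive_unique, is_derive_uh. auto.
Qed.

Lemma ip_uxi_i_Lop e N mu H xi v i : e <> 0 -> (1 <= i <= N)%nat ->
  mass_map e N mu H xi -> regular_neumann v ->
  ip (uxi_i e N H xi i) (Lop e (fun x => uxi e N H xi x + v x))
  = RInt (fun x => tmode e N (hcat N xi (H xi)) (i - 1) (Derive (fun s => H (shift xi i s)) 0) x
                   * (e ^ 2 * (uh_xx e N (hcat N xi (H xi)) x + Derive (Derive v) x)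
                      - Defs.f (uh e N (hcat N xi (H xi)) x + v x))) 0 1.
Proof.
  intros He Hi Hmass Hv. unfold ip. apply RInt_ext. intros x _.
  rewrite (uxi_i_eq_tmode e N mu), Lop_uxi_add by auto. reflexivity.
Qed.

Lemma RInt_sq_lt e a v : L2norm v < Rpower e a -> RInt (fun x => v x ^ 2) 0 1 < Rpower e (2 * a).
Proof.
  intros Hv. apply sqrt_lt_sq in Hv; [|apply exp_pos].
  rewrite <- Rpower_plus in Hv. replace (2 * a) with (a + a) by ring. exact Hv.
Qed.

Lemma RInt_pow4_lt e a v : L4norm v < Rpower e a -> RInt (fun x => v x ^ 4) 0 1 < Rpower e (4 * a).
Proof.
  intros Hv. assert (HR : 0 < Rpower e a) by apply exp_pos.
  apply sqrt_lt_sq in Hv; [|exact HR]. apply sqrt_lt_sq in Hv; [|nra].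
  rewrite <- !Rpower_plus in Hv. replace (4 * a) with (a + a + (a + a)) by ring. exact Hv.
Qed.

Lemma Rpower_exponents e m kap : 0 < e < 1 -> 0 < m -> 0 < kap ->
  Rpower e (3 + 2 * m) / e <= Rpower e (2 + 2 * m - 2 * kap) /\
  Rpower e (3 + 2 * m) / (e * Rpower e (2 * kap)) = Rpower e (2 + 2 * m - 2 * kap) /\
  Rpower e (2 * kap) * Rpower e (3 + 2 * m - 4 * kap) / e = Rpower e (2 + 2 * m - 2 * kap).
Proof.
  intros He Hm Hk. split; [|split].
  - replace (3 + 2 * m) with ((2 + 2 * m) + 1) by ring. rewrite Rpower_plus1 by lra.
    replace (Rpower e (2 + 2 * m) * e / e) with (Rpower e (2 + 2 * m)) by (field; lra).
    apply Rle_Rpower_lt1; lra.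
  - replace (3 + 2 * m) with ((2 + 2 * m - 2 * kap) + 2 * kap + 1) by ring.
    rewrite Rpower_plus1, Rpower_plus by lra.
    field. split; try lra; apply Rgt_not_eq, exp_pos.
  - rewrite <- Rpower_plus.
    replace (2 * kap + (3 + 2 * m - 4 * kap)) with ((2 + 2 * m - 2 * kap) + 1) by ring.
    rewrite Rpower_plus1 by lra. field. lra.
Qed.

(* Choosing [l = e^(2 kappa)] balances the [v^2] and [v^4] terms. *)
Lemma power_count e m kap KD Kg K tau I2 I4 :
  0 < e < 1 -> 0 < m -> 0 < kap -> 0 <= KD -> 0 <= Kg -> 0 <= K ->
  0 <= tau <= Rpower e (2 + 2 * m - 2 * kap) ->
  I2 < Rpower e (3 + 2 * m) -> I4 < Rpower e (3 + 2 * m - 4 * kap) ->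
  (4 * KD + 4 * Kg) * tau
  + (4 * Kg * tau + 24 * K / e + 8 / (e * Rpower e (2 * kap))) * I2
  + (8 * Rpower e (2 * kap) / e) * I4
  <= (4 * KD + 8 * Kg + 24 * K + 16) * Rpower e (2 + 2 * m - 2 * kap).
Proof.
  intros He Hm Hk HKD HKg HK Ht HI2 HI4.
  destruct (Rpower_exponents e m kap He Hm Hk) as [HR3e [HR3el HR4]].
  assert (HR3 : Rpower e (3 + 2 * m) <= 1)
    by (rewrite <- (Rpower_O e) by lra; apply Rle_Rpower_lt1; lra).
  assert (HR3p : 0 < Rpower e (3 + 2 * m)) by apply exp_pos.
  assert (Hl : 0 < Rpower e (2 * kap)) by apply exp_pos.
  set (E := Rpower e (2 + 2 * m - 2 * kap)) in *.
  set (R3 := Rpower e (3 + 2 * m)) in *. set (R4 := Rpower e (3 + 2 * m - 4 * kap)) in *.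
  set (l := Rpower e (2 * kap)) in *.
  clearbody E R3 R4 l.
  assert (Hb : 0 <= 4 * Kg * tau + 24 * K / e + 8 / (e * l)).
  { assert (0 <= 24 * K / e) by (apply Rdiv_le_0_compat; lra).
    assert (0 <= 8 / (e * l)) by (apply Rdiv_le_0_compat; nra). nra. }
  assert (S2 : (4 * Kg * tau + 24 * K / e + 8 / (e * l)) * I2
               <= 4 * Kg * tau * R3 + 24 * K * (R3 / e) + 8 * (R3 / (e * l))).
  { replace (4 * Kg * tau * R3 + 24 * K * (R3 / e) + 8 * (R3 / (e * l)))
      with ((4 * Kg * tau + 24 * K / e + 8 / (e * l)) * R3) by (field; lra).
    apply Rmult_le_compat_l; lra. }
  assert (S4 : (8 * l / e) * I4 <= 8 * (l * R4 / e)).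
  { replace (8 * (l * R4 / e)) with ((8 * l / e) * R4) by (field; lra).
    apply Rmult_le_compat_l; [apply Rdiv_le_0_compat|]; lra. }
  rewrite HR3el in S2. rewrite HR4 in S4.
  assert (4 * Kg * tau * R3 <= 4 * Kg * E) by (assert (tau * R3 <= E) by nra; nra).
  assert (24 * K * (R3 / e) <= 24 * K * E) by (apply Rmult_le_compat_l; lra).
  assert ((4 * KD + 4 * Kg) * tau <= (4 * KD + 4 * Kg) * E) by (apply Rmult_le_compat_l; lra).
  lra.
Qed.

Theorem lemma5p12 :
  forall N : nat, (1 <= N)%nat ->
  exists kappa0_bar : R, 0 < kappa0_bar /\
  forall kappa0 : R, 0 < kappa0 < kappa0_bar ->
  forall mu : R, -1 < mu < 1 ->
  forall m : R, 0 < m ->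
  exists kappa_bar : R, 0 < kappa_bar /\
  forall kappa : R, 0 < kappa < kappa_bar ->
  exists C eps0 : R, 0 < C /\ 0 < eps0 /\
  forall eps : R, 0 < eps < eps0 ->
  forall (xi : nat -> R) (H : (nat -> R) -> R),
    InOmega eps kappa0 N (hcat N xi (H xi)) ->
    mass_map eps N mu H xi ->
  forall v : R -> R,
    regular_neumann v ->
    (forall i : nat, (1 <= i <= N)%nat -> ip v (uxi_i eps N H xi i) = 0) ->
    L2norm v < Rpower eps (3 / 2 + m) ->
    L4norm v < Rpower eps (3 / 4 + m / 2 - kappa) ->
  forall i : nat, (1 <= i <= N)%nat ->
    ip (uxi_i eps N H xi i) (Lop eps (fun x => uxi eps N H xi x + v x))
      <= C * Rpower eps (2 + 2 * m - 2 * kappa).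
Proof.
  intros N HN. exists 1. split; [lra|]. intros k0 Hk0 mu _ m Hm.
  exists 1. split; [lra|]. intros kap Hkap.
  destruct (InOmega_layer_config k0 m ltac:(lra) Hm) as [e1 [He1 Hcfg]].
  destruct (constants_nonneg N) as [HKu [_ [_ [HKlin HKres_t]]]].
  exists (4 * Kres_t N + 8 * Klin N + 24 * Ku N + 16), e1.
  split; [lra|]. split; [lra|].
  intros e He xi H Hom Hmass v Hv _ HL2 HL4 i Hi.
  destruct (Hcfg e N _ He Hom) as [HC Htau]. pose proof (cfg_eps HC) as He01.
  rewrite (ip_uxi_i_Lop e N mu) by (auto; lra).
  eapply Rle_trans.
  { apply (RInt_tmode_Lop_le e _ N _ (i - 1) _ HC ltac:(lia)
             (shift_rate_bound e _ N mu H xi i HC Hi Hmass) v Hv (Rpower e (2 * kap))).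
    apply exp_pos. }
  apply power_count; auto; try lra.
  - split; [apply Rdiv_le_0_compat; [left; apply tail_pos | apply pow_lt; lra]|].
    eapply Rle_trans; [exact Htau | apply Rle_Rpower_lt1; lra].
  - replace (3 + 2 * m) with (2 * (3 / 2 + m)) by lra. apply RInt_sq_lt. exact HL2.
  - replace (3 + 2 * m - 4 * kap) with (4 * (3 / 4 + m / 2 - kap)) by lra.
    apply RInt_pow4_lt. exact HL4.
Qed.
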